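(* Let $\{F_y\}_{y\in P}$ be a family of $d$-IEMs on $\mathbb{S}^1$ with fixed combinatorics, elemental subintervals $J_\alpha(y)$ and translation amounts $\omega_\alpha(y)$ depending $C^1$ on $y$, let $f$ be a smooth $1$-periodic function, and $T_\varepsilon(x,y)=(F_y(x),\,y+\varepsilon f(F_y(x)))$. Let $X^*=\{(x_k^*,y_0^* )\}_{k=0}^{q-1}$, $x_k^*=F_{y_0^*}^k(x_0^* )$, be a $q$-periodic orbit of $T_0$ with $y_0^*$ in the interior of $P$ and each $x_k^*$ in the interior of an elemental subinterval $J_{\alpha_k}(y_0^* )$. Set $$M(X^* )=\Big(\sum_{k=0}^{q-1}f'(x_k^* )\Big)\Big(\sum_{k=0}^{q-1}\omega'_{\alpha_k}(y_0^* )\Big).$$ (i) If $\sum_{k=0}^{q-1}f(x_k^* )=0$ and $M(X^* )\neq 0$, then there exist $\varepsilon_0>0$ and a neighborhood $U$ of $(x_0^*,y_0^* )$ such that for every $0<|\varepsilon|<\varepsilon_0$ the map $T_\varepsilon$ has exactly one point $(x_0^\varepsilon,y_0^\varepsilon)\in U$ with $T_\varepsilon^q(x_0^\varepsilon,y_0^\varepsilon)=(x_0^\varepsilon,y_0^\varepsilon)$; it depends continuously on $\varepsilon$ and tends to $(x_0^*,y_0^* )$ as $\varepsilon\to0$. (ii) If $\sum_{k=0}^{q-1}f(x_k^* )\neq 0$, then there exist $\varepsilon_0>0$ and a neighborhood $U$ of $(x_0^*,y_0^* )$ such that for $0<|\varepsilon|<\varepsilon_0$ no point of $U$ satisfies 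$T_\varepsilon^q(p)=p$.
   Context: A $d$-IEM on $\mathbb{S}^1=\mathbb{R}/\mathbb{Z}$ (identified with $[0,1)$) translates each of $d$ consecutive left-closed right-open elemental subintervals $J_\alpha$; here $F_y(x)=x+\omega_\alpha(y)$ for $x\in J_\alpha(y)$, with the endpoints of the $J_\alpha(y)$ and $\omega_\alpha(y)$ of class $C^1$ in $y\in P$, $P$ an open interval. *)

From Stdlib Require Import Reals List.
From Coquelicot Require Import Coquelicot.
Import ListNotations.
Open Scope R_scope.

Definition sumk (n : nat) (g : nat -> R) : R :=
  fold_right Rplus 0 (map g (seq 0 n)).

Definition inP (pa pb : Rbar) (y : R) : Prop :=
  Rbar_lt pa (Finite y) /\ Rbar_lt (Finite y) pb.

Definition C1_on (pa pb : Rbar) (g : R -> R) : Prop :=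
  forall y, inP pa pb y -> ex_derive g y /\ continuous (Derive g) y.

Definition smooth (f : R -> R) : Prop := forall (n : nat) (x : R), ex_derive_n f n x.

(* A family of d-IEMs with fixed combinatorics on S^1 = R/Z (identified with
   [0,1)): endpoints b 0 y < b 1 y < ... < b d y = b 0 y + 1, the elemental
   intervals being J_alpha(y) = [b alpha y, b (alpha+1) y) (mod 1),
   alpha = 0..d-1, each translated by omega alpha y. *)
Definition IEM_family (d : nat) (pa pb : Rbar) (b om : nat -> R -> R) : Prop :=
  (1 <= d)%nat /\
  Rbar_lt pa pb /\
  (forall y, inP pa pb y ->
     (forall al, (al < d)%nat -> b al y < b (S al) y) /\ b d y = b 0%nat y + 1) /\
  (forall al, (al <= d)%nat -> C1_on pa pb (b al)) /\
  (forall al, (al < d)%nat -> C1_on pa pb (om al)).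

Definition lift (b : nat -> R -> R) (y x : R) : R :=
  b 0%nat y + frac_part (x - b 0%nat y).

(* translation amount applied to x: omega_alpha(y) for the alpha with x in J_alpha(y) *)
Definition shift (d : nat) (b om : nat -> R -> R) (y x : R) : R :=
  sumk d (fun al =>
    if Rle_dec (b al y) (lift b y x) then
      if Rlt_dec (lift b y x) (b (S al) y) then om al y else 0
    else 0).

Definition IEM (d : nat) (b om : nat -> R -> R) (y x : R) : R :=
  frac_part (x + shift d b om y x).

Definition Tmap (d : nat) (b om : nat -> R -> R) (f : R -> R) (eps : R)
    (p : R * R) : R * R :=
  let x' := IEM d b om (snd p) (fst p) in (x', snd p + eps * f x').

Definition cdist (a c : R) : R := Rmin (frac_part (a - c)) (frac_part (c - a)).

(* U (a set of points (x,y) with x in [0,1) representing S^1 x R) is a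
   neighbourhood of p in S^1 x R *)
Definition is_nbhd (U : R * R -> Prop) (p : R * R) : Prop :=
  exists r, 0 < r /\
    forall x y, 0 <= x < 1 -> cdist x (fst p) < r -> Rabs (y - snd p) < r -> U (x, y).

From Pilot Require Import Defs.
From Stdlib Require Import Reals List Lra Lia ZArith IndefiniteDescription.
From Coquelicot Require Import Coquelicot.
Open Scope R_scope.

(* Near the periodic orbit each [F_y] acts on a point by the translation of its elemental
   interval, so [T_eps^q] is explicit there: it maps [(x_0 + u, y)] to [(x_0 + U_q, y + eps S_q)],
   where [(U_k, S_k)] follows the recursion [orbit] below.  Hence a point is [q]-periodic iff
   [D := U_q - u] and [eps A] vanish, with [A := S_q].  At [(u, y, eps) = (0, y_0, 0)] we have
   [D = 0] for every [u] and [A = sum_k f(x_k)]; to first order [D] grows like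
   [(sum_k omega'_(alpha_k)(y_0)) (y - y_0)] and [A] like [(sum_k f'(x_k)) u], all other
   dependencies being small on small boxes.  If [sum_k f(x_k) <> 0], [A] cannot vanish near
   [(0, y_0, 0)], which is (ii).  If [sum_k f(x_k) = 0] and [M <> 0], a quantitative implicit
   function theorem, proved by two applications of the intermediate value theorem, solves
   [D = A = 0] uniquely and Lipschitz-continuously in [eps], which is (i). *)

Lemma sumk_S n g : sumk (S n) g = sumk n g + g n.
Proof.
  unfold sumk. rewrite seq_S, map_app, fold_right_app. simpl.
  generalize (map g (seq 0 n)). intros l. induction l as [|x l IH]; simpl; lra.
Qed.

Lemma sumk_mult_r n (t : nat -> R) c : sumk n (fun k => t k * c) = sumk n t * c.
Proof. induction n; [unfold sumk; simpl; ring|]. rewrite !sumk_S, IHn. ring. Qed.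

Lemma sumk_shift_periodic n (g : nat -> R) :
  g n = g 0%nat -> sumk n (fun k => g (S k)) = sumk n g.
Proof.
  intros Hn. enough (forall m, sumk m (fun k => g (S k)) + g 0%nat = sumk m g + g m) as H.
  { specialize (H n). lra. }
  induction m; [unfold sumk; simpl; lra|]. rewrite !sumk_S. lra.
Qed.

Lemma sumk_single n (g : nat -> R) j :
  (j < n)%nat -> (forall k, (k < n)%nat -> k <> j -> g k = 0) -> sumk n g = g j.
Proof.
  intros Hj Hg. enough (forall m, (m <= n)%nat -> sumk m g = if (j <? m)%nat then g j else 0) as H.
  { rewrite H by lia. replace (j <? n)%nat with true; [reflexivity|symmetry; apply Nat.ltb_lt; lia]. }
  induction m; intros Hm; [reflexivity|]. rewrite sumk_S, IHm by lia.
  destruct (Nat.eq_dec m j) as [->|Hne].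
  - replace (j <? j)%nat with false by (symmetry; apply Nat.ltb_ge; lia).
    replace (j <? S j)%nat with true by (symmetry; apply Nat.ltb_lt; lia). ring.
  - rewrite (Hg m) by lia. rewrite Rplus_0_r.
    destruct (Nat.ltb_spec j m), (Nat.ltb_spec j (S m)); lia || reflexivity.
Qed.

Lemma sumk_term_le n (t : nat -> R) k :
  (forall j, (j < n)%nat -> 0 <= t j) -> (k < n)%nat -> t k <= sumk n t.
Proof.
  intros Ht Hk. induction n as [|n IH]; [lia|]. rewrite sumk_S.
  assert (Hsum : forall m, (m <= n)%nat -> 0 <= sumk m t).
  { induction m; intros Hm; [unfold sumk; simpl; lra|].
    rewrite sumk_S. specialize (IHm ltac:(lia)). specialize (Ht m ltac:(lia)). lra. }
  destruct (Nat.eq_dec k n) as [->|Hne].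
  - specialize (Hsum n (le_n n)). lra.
  - specialize (IH ltac:(intros; apply Ht; lia) ltac:(lia)). specialize (Ht n ltac:(lia)). lra.
Qed.

Lemma telescope_approx (X t : nat -> R) beta n :
  (forall k, (k < n)%nat -> Rabs (X (S k) - X k - t k) <= beta) ->
  Rabs (X n - X 0%nat - sumk n t) <= INR n * beta.
Proof.
  induction n; intros H.
  - unfold sumk; simpl. replace (X 0%nat - X 0%nat - 0) with 0 by ring. rewrite Rabs_R0. lra.
  - rewrite sumk_S, S_INR.
    replace (X (S n) - X 0%nat - (sumk n t + t n))
      with ((X n - X 0%nat - sumk n t) + (X (S n) - X n - t n)) by ring.
    eapply Rle_trans; [apply Rabs_triang|].
    specialize (IHn ltac:(intros; apply H; lia)). specialize (H n ltac:(lia)). lra.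
Qed.

Lemma telescope_bound (X : nat -> R) beta n :
  (forall k, (k < n)%nat -> Rabs (X (S k) - X k) <= beta) -> Rabs (X n - X 0%nat) <= INR n * beta.
Proof.
  intros H. pose proof (telescope_approx X (fun _ => 0) beta n) as T.
  assert (Hz : forall m, sumk m (fun _ => 0) = 0) by (induction m; [reflexivity|rewrite sumk_S, IHm; ring]).
  rewrite Hz, Rminus_0_r in T. apply T.
  intros k Hk. rewrite Rminus_0_r. auto.
Qed.

(** * Fractional parts and the circle *)

Lemma frac_part_range r : 0 <= frac_part r < 1.
Proof. destruct (base_fp r); lra. Qed.

Lemma frac_part_unique r z x : 0 <= x < 1 -> r = IZR z + x -> frac_part r = x.
Proof. intros Hx Hr. symmetry. apply (Int_part_frac_part_spec r z x Hx Hr). Qed.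

Lemma frac_part_add_IZR r z : frac_part (r + IZR z) = frac_part r.
Proof.
  apply (frac_part_unique _ (Int_part r + z)); [apply frac_part_range|].
  rewrite plus_IZR, (Rplus_Int_part_frac_part r) at 1. ring.
Qed.

Lemma frac_part_id x : 0 <= x < 1 -> frac_part x = x.
Proof. intros Hx. apply (frac_part_unique _ 0); [exact Hx|simpl; ring]. Qed.

Lemma frac_part_frac_part_add a w : frac_part (frac_part a + w) = frac_part (a + w).
Proof.
  replace (a + w) with ((frac_part a + w) + IZR (Int_part a)) by (unfold frac_part; ring).
  symmetry. apply frac_part_add_IZR.
Qed.

Lemma frac_part_sub_frac_part a b : frac_part (frac_part a - frac_part b) = frac_part (a - b).
Proof.
  replace (frac_part a - frac_part b) with ((a - b) + IZR (Int_part b - Int_part a)).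
  - apply frac_part_add_IZR.
  - rewrite minus_IZR. unfold frac_part. ring.
Qed.

Lemma frac_part_eq_IZR_diff a b : frac_part a = frac_part b -> exists z, a - b = IZR z.
Proof.
  intros H. exists (Int_part a - Int_part b)%Z. rewrite minus_IZR.
  rewrite (Rplus_Int_part_frac_part a) at 1. rewrite (Rplus_Int_part_frac_part b) at 1. lra.
Qed.

Lemma IZR_Rabs_lt_1 z : Rabs (IZR z) < 1 -> z = 0%Z.
Proof.
  intros H. apply Rabs_def2 in H.
  assert (-1 < z < 1)%Z by (split; apply lt_IZR; simpl; lra). lia.
Qed.

Lemma frac_part_le r : 0 <= r -> frac_part r <= r.
Proof.
  intros H. destruct (base_Int_part r) as [H1 H2].
  assert (0 <= IZR (Int_part r)) by (apply IZR_le; apply Z.lt_pred_le, lt_IZR; simpl; lra).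
  unfold frac_part. lra.
Qed.

Lemma cdist_frac_part_le a b : cdist (frac_part a) (frac_part b) <= Rabs (a - b).
Proof.
  unfold cdist. rewrite !frac_part_sub_frac_part. destruct (Rle_or_lt 0 (a - b)).
  - rewrite Rabs_right by lra. eapply Rle_trans; [apply Rmin_l|]. apply frac_part_le; lra.
  - rewrite Rabs_left by lra. eapply Rle_trans; [apply Rmin_r|]. replace (- (a - b)) with (b - a) by ring. apply frac_part_le; lra.
Qed.

Lemma cdist_lt_displacement x x0 r : 0 <= x < 1 -> cdist x x0 < r ->
  exists u, Rabs u < r /\ x = frac_part (x0 + u).
Proof.
  intros Hx Hd. unfold cdist in Hd. destruct (Rle_or_lt (frac_part (x - x0)) (frac_part (x0 - x))).
  - rewrite Rmin_left in Hd by lra. exists (frac_part (x - x0)).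
    destruct (frac_part_range (x - x0)). split; [rewrite Rabs_right; lra|].
    replace (x0 + frac_part (x - x0)) with (x + - IZR (Int_part (x - x0))) by (unfold frac_part; ring).
    rewrite <- opp_IZR, frac_part_add_IZR, frac_part_id; auto.
  - rewrite Rmin_right in Hd by lra. exists (- frac_part (x0 - x)).
    destruct (frac_part_range (x0 - x)). split; [rewrite Rabs_Ropp, Rabs_right; lra|].
    replace (x0 + - frac_part (x0 - x)) with (x + IZR (Int_part (x0 - x))) by (unfold frac_part; ring).
    rewrite frac_part_add_IZR, frac_part_id; auto.
Qed.

Lemma periodic_IZR (f : R -> R) : (forall x, f (x + 1) = f x) -> forall z x, f (x + IZR z) = f x.
Proof.
  intros H. assert (Hn : forall n x, f (x + INR n) = f x).
  { induction n; intros x; [simpl; rewrite Rplus_0_r; reflexivity|].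
    rewrite S_INR, <- Rplus_assoc, H. apply IHn. }
  intros z x. destruct (Z.le_gt_cases 0 z).
  - rewrite <- (Z2Nat.id z), <- INR_IZR_INZ by lia. apply Hn.
  - replace z with (- Z.of_nat (Z.to_nat (- z)))%Z by lia.
    rewrite opp_IZR, <- INR_IZR_INZ, <- (Hn (Z.to_nat (- z))). f_equal. ring.
Qed.

Lemma periodic_frac_part (f : R -> R) : (forall x, f (x + 1) = f x) -> forall x, f (frac_part x) = f x.
Proof.
  intros H x. rewrite (Rplus_Int_part_frac_part x) at 2. rewrite Rplus_comm. symmetry.
  apply periodic_IZR, H.
Qed.

Lemma Rabs_mult_le x y X Y : Rabs x <= X -> Rabs y <= Y -> Rabs (x * y) <= X * Y.
Proof. intros. rewrite Rabs_mult. apply Rmult_le_compat; auto; apply Rabs_pos. Qed.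

Lemma mult_lt_of_lt_div_succ K t eta : 0 <= K -> 0 <= t -> t < eta / (K + 1) -> K * t < eta.
Proof.
  intros HK Ht Hlt. apply Rmult_lt_compat_l with (r := K + 1) in Hlt; [|lra].
  replace ((K + 1) * (eta / (K + 1))) with eta in Hlt by (field; lra). nra.
Qed.

Lemma continuous_Rabs_lt (g : R -> R) c : continuous g c ->
  forall eps, 0 < eps -> exists del, 0 < del /\ forall z, Rabs (z - c) < del -> Rabs (g z - g c) < eps.
Proof.
  intros Hc eps He.
  destruct (proj1 (filterlim_locally g (g c)) Hc (mkposreal eps He)) as [del Hd].
  exists del. split; [apply cond_pos|]. intros z Hz. exact (Hd z Hz).
Qed.

Lemma inP_open pa pb y0 : inP pa pb y0 ->
  exists s, 0 < s /\ forall y, Rabs (y - y0) < s -> inP pa pb y.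
Proof.
  intros [H1 H2].
  assert (exists s1, 0 < s1 /\ forall y, Rabs (y - y0) < s1 -> Rbar_lt pa y) as [s1 [Hs1 Hs1']].
  { destruct pa as [a| |]; simpl in *; try contradiction.
    - exists (y0 - a). split; [lra|]. intros y Hy. apply Rabs_def2 in Hy. simpl. lra.
    - exists 1. split; [lra|]. intros; exact I. }
  assert (exists s2, 0 < s2 /\ forall y, Rabs (y - y0) < s2 -> Rbar_lt y pb) as [s2 [Hs2 Hs2']].
  { destruct pb as [a| |]; simpl in *; try contradiction.
    - exists (a - y0). split; [lra|]. intros y Hy. apply Rabs_def2 in Hy. simpl. lra.
    - exists 1. split; [lra|]. intros; exact I. }
  exists (Rmin s1 s2). split; [apply Rmin_glb_lt; auto|].
  intros y Hy. pose proof (Rmin_l s1 s2). pose proof (Rmin_r s1 s2).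
  split; [apply Hs1'|apply Hs2']; lra.
Qed.

Lemma uniform_radius (P : nat -> R -> Prop) n :
  (forall k r r', 0 < r' <= r -> P k r -> P k r') ->
  (forall k, (k < n)%nat -> exists r, 0 < r /\ P k r) ->
  exists r, 0 < r /\ forall k, (k < n)%nat -> P k r.
Proof.
  intros Hmon. induction n; intros H.
  - exists 1. split; [lra|]. intros; lia.
  - destruct IHn as [r1 [Hr1 H1]]; [intros; apply H; lia|].
    destruct (H n) as [r2 [Hr2 H2]]; [lia|].
    pose proof (Rmin_l r1 r2). pose proof (Rmin_r r1 r2).
    assert (Hm : 0 < Rmin r1 r2) by (apply Rmin_glb_lt; auto).
    exists (Rmin r1 r2). split; [exact Hm|]. intros k Hk.
    destruct (Nat.eq_dec k n) as [->|].
    + apply (Hmon n r2); [lra|exact H2].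
    + apply (Hmon k r1); [lra|apply H1; lia].
Qed.

(* Mean value theorem applied to [z |-> g z - g'(c) z]. *)
Lemma derive_linear_error (g : R -> R) c :
  (exists d0, 0 < d0 /\ forall z, Rabs (z - c) < d0 -> ex_derive g z) ->
  continuous (Derive g) c ->
  forall eta, 0 < eta -> exists rho, 0 < rho /\ forall a a',
    Rabs (a - c) <= rho -> Rabs (a' - c) <= rho ->
    Rabs (g a - g a' - Derive g c * (a - a')) <= eta * Rabs (a - a').
Proof.
  intros [d0 [Hd0 Hder]] Hc eta Heta.
  destruct (continuous_Rabs_lt _ _ Hc eta Heta) as [d1 [Hd1 Hd1']].
  set (m := Rmin d0 d1). pose proof (Rmin_l d0 d1). pose proof (Rmin_r d0 d1).
  assert (Hm : 0 < m) by (apply Rmin_glb_lt; auto).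
  exists (m / 2). split; [lra|]. intros a a' Ha Ha'.
  assert (Hin : forall z, Rmin a' a <= z <= Rmax a' a -> Rabs (z - c) < m).
  { intros z Hz. apply Rabs_le_between in Ha. apply Rabs_le_between in Ha'.
    unfold Rmin, Rmax in Hz. destruct (Rle_dec a' a); apply Rabs_def1; lra. }
  assert (Hdz : forall z, Rmin a' a <= z <= Rmax a' a -> ex_derive g z)
    by (intros z Hz; apply Hder; specialize (Hin z Hz); unfold m in *; lra).
  destruct (MVT_gen (fun z => g z - Derive g c * z) a' a (fun z => Derive g z - Derive g c))
    as [z [Hz Heq]].
  - intros z Hz. auto_derive; [apply Hdz; lra|]. rewrite Rmult_1_l, Rmult_1_r. reflexivity.
  - intros z Hz. apply continuity_pt_filterlim, (ex_derive_continuous (fun z => g z - Derive g c * z)).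
    auto_derive. apply Hdz; lra.
  - replace (g a - g a' - Derive g c * (a - a')) with ((Derive g z - Derive g c) * (a - a')) by lra.
    rewrite Rabs_mult. apply Rmult_le_compat_r; [apply Rabs_pos|].
    left. apply Hd1'. specialize (Hin z Hz). unfold m in *. lra.
Qed.

Lemma lipschitz_continuity (G : R -> R) L : 0 <= L ->
  (forall x x', Rabs (G x - G x') <= L * Rabs (x - x')) -> continuity G.
Proof.
  intros HL H x0 eps Heps. exists (eps / (L + 1)). split; [apply Rdiv_lt_0_compat; lra|].
  intros x [_ Hx]. simpl in *. unfold R_dist in *.
  apply Rle_lt_trans with ((L + 1) * Rabs (x - x0)).
  - pose proof (H x x0). pose proof (Rabs_pos (x - x0)). nra.
  - apply Rmult_lt_reg_r with (/ (L + 1)); [apply Rinv_0_lt_compat; lra|].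
    replace ((L + 1) * Rabs (x - x0) * / (L + 1)) with (Rabs (x - x0)) by (field; lra). exact Hx.
Qed.

Definition clamp lo hi z := Rmax lo (Rmin hi z).

Lemma clamp_between lo hi z : lo <= hi -> lo <= clamp lo hi z <= hi.
Proof. intros. unfold clamp, Rmax, Rmin. repeat destruct Rle_dec; lra. Qed.

Lemma clamp_id lo hi z : lo <= z <= hi -> clamp lo hi z = z.
Proof. intros. unfold clamp, Rmax, Rmin. repeat destruct Rle_dec; lra. Qed.

Lemma clamp_lipschitz lo hi x x' : lo <= hi -> Rabs (clamp lo hi x - clamp lo hi x') <= Rabs (x - x').
Proof.
  intros. pose proof (Rle_abs (x - x')). pose proof (Rle_abs (- (x - x'))). rewrite Rabs_Ropp in *.
  unfold clamp, Rmax, Rmin. repeat destruct Rle_dec; apply Rabs_le; lra.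
Qed.

(* Clamping extends [g] from [[lo, hi]] to a globally Lipschitz function. *)
Lemma IVT_lipschitz (g : R -> R) lo hi L : lo < hi -> 0 <= L ->
  (forall z z', lo <= z <= hi -> lo <= z' <= hi -> Rabs (g z - g z') <= L * Rabs (z - z')) ->
  g lo * g hi < 0 -> exists z, lo < z < hi /\ g z = 0.
Proof.
  intros Hlh HL Hg Hs.
  set (G := fun z => g (clamp lo hi z)).
  assert (HG : continuity G).
  { apply (lipschitz_continuity G L HL). intros x x'. unfold G.
    eapply Rle_trans; [apply Hg; apply clamp_between; lra|].
    apply Rmult_le_compat_l; [exact HL|apply clamp_lipschitz; lra]. }
  destruct (IVT_cor G lo hi HG) as [z [Hz HGz]]; [lra|unfold G; rewrite !clamp_id; lra|].
  unfold G in HGz. rewrite clamp_id in HGz by lra.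
  exists z. split; [|exact HGz].
  destruct Hz as [[Hz1|Hz1] [Hz2|Hz2]]; subst; try rewrite HGz in Hs; lra.
Qed.

Lemma at_right_0_pos : at_right 0 (fun t => 0 < t).
Proof. exists (mkposreal 1 Rlt_0_1). intros t _ Ht. exact Ht. Qed.

Lemma at_right_0_mult_lt c c' : 0 < c' -> at_right 0 (fun t => c * t < c').
Proof.
  intros Hc'. pose proof (Rabs_pos c) as Hc.
  assert (Hd : 0 < c' / (Rabs c + 1)) by (apply Rdiv_lt_0_compat; lra).
  exists (mkposreal _ Hd). intros t Ht _. change (Rabs (t + - 0) < c' / (Rabs c + 1)) in Ht.
  rewrite Ropp_0, Rplus_0_r in Ht.
  apply Rmult_lt_compat_l with (r := Rabs c + 1) in Ht; [|lra].
  replace ((Rabs c + 1) * (c' / (Rabs c + 1))) with c' in Ht by (field; lra).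
  pose proof (Rle_abs (c * t)). rewrite Rabs_mult in *. pose proof (Rabs_pos t). nra.
Qed.

Section IEMStep.
Variables (d : nat) (b om : nat -> R -> R) (y : R).
Hypothesis Hb : forall al, (al < d)%nat -> b al y < b (S al) y.

Lemma endpoints_le al al' : (al <= al' <= d)%nat -> b al y <= b al' y.
Proof.
  intros Hl. induction al' as [|al' IH].
  - replace al with 0%nat by lia. lra.
  - destruct (Nat.eq_dec al (S al')) as [->|Hne]; [lra|].
    specialize (IH ltac:(lia)). specialize (Hb al' ltac:(lia)). lra.
Qed.

Lemma shift_on_interval x al : (al < d)%nat -> b al y <= lift b y x < b (S al) y ->
  Defs.shift d b om y x = om al y.
Proof.
  intros Hal [H1 H2]. unfold Defs.shift. rewrite (sumk_single d _ al Hal).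
  - destruct (Rle_dec _ _); [|lra]. destruct (Rlt_dec _ _); [reflexivity|lra].
  - intros k Hk Hne. assert (k < al \/ al < k)%nat as [Hlt|Hgt] by lia.
    + pose proof (endpoints_le (S k) al ltac:(lia)).
      destruct (Rle_dec _ _); auto. destruct (Rlt_dec _ _); auto. lra.
    + pose proof (endpoints_le (S al) k ltac:(lia)).
      destruct (Rle_dec _ _); auto. lra.
Qed.

Hypothesis Hd : b d y = b 0%nat y + 1.

(* [lift b y0 xk + u] is a representative of [xk + u] in [[b 0 y, b 0 y + 1)], hence it is the lift. *)
Lemma IEM_translate y0 xk u al : (al < d)%nat -> b al y < lift b y0 xk + u < b (S al) y ->
  IEM d b om y (frac_part (xk + u)) = frac_part (xk + u + om al y).
Proof.
  intros Hal H.
  pose proof (endpoints_le 0 al ltac:(lia)). pose proof (endpoints_le (S al) d ltac:(lia)).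
  assert (Hlift : lift b y (frac_part (xk + u)) = lift b y0 xk + u).
  { unfold lift in *. replace (frac_part (xk + u) - b 0%nat y) with (frac_part (xk + u) + - b 0%nat y) by ring.
    rewrite frac_part_frac_part_add.
    rewrite (frac_part_unique _ (Int_part (xk - b 0%nat y0))
      (b 0%nat y0 + frac_part (xk - b 0%nat y0) + u - b 0%nat y)); [ring|lra|unfold frac_part; ring]. }
  unfold IEM. rewrite (shift_on_interval _ al Hal) by lra. apply frac_part_frac_part_add.
Qed.

End IEMStep.

(** * A quantitative implicit function theorem *)

Definition in_box (y0 r s e u y ep : R) : Prop := Rabs u <= r /\ Rabs (y - y0) <= s /\ Rabs ep <= e.

Section QuantitativeIFT.
Variables (D A : R -> R -> R -> R) (y0 a c r s e lam L : R).
Hypotheses (Ha : a <> 0) (Hc : c <> 0) (Hr : 0 < r) (Hs : 0 < s) (He : 0 < e)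
  (Hlam : 0 <= lam) (HL : 0 <= L).
Local Notation box := (in_box y0 r s e).
Hypothesis HDy : forall u y y' ep, box u y ep -> box u y' ep ->
  Rabs (D u y ep - D u y' ep - a * (y - y')) <= Rabs a / 2 * Rabs (y - y').
Hypothesis HDue : forall u u' y ep ep', box u y ep -> box u' y ep' ->
  Rabs (D u y ep - D u' y ep') <= lam * Rabs (u - u') + L * Rabs (ep - ep').
Hypothesis HAu : forall u u' y ep, box u y ep -> box u' y ep ->
  Rabs (A u y ep - A u' y ep - c * (u - u')) <= Rabs c / 4 * Rabs (u - u').
Hypothesis HAye : forall u y y' ep ep', box u y ep -> box u y' ep' ->
  Rabs (A u y ep - A u y' ep') <= L * (Rabs (y - y') + Rabs (ep - ep')).
Hypotheses (HD0 : forall u, Rabs u <= r -> D u y0 0 = 0) (HA0 : A 0 y0 0 = 0).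
Hypotheses (Hlam_small : 8 * L * lam <= Rabs a * Rabs c) (He_small : 2 * L * e < Rabs a * s)
  (Hs_small : 4 * L * (s + e) < Rabs c * r).

Lemma Rabs_a_pos : 0 < Rabs a.
Proof. apply Rabs_pos_lt, Ha. Qed.

Lemma Rabs_c_pos : 0 < Rabs c.
Proof. apply Rabs_pos_lt, Hc. Qed.

Lemma D_zeros_close u y ep u' y' ep' : box u y ep -> box u' y' ep' ->
  D u y ep = 0 -> D u' y' ep' = 0 ->
  Rabs a / 2 * Rabs (y - y') <= lam * Rabs (u - u') + L * Rabs (ep - ep').
Proof.
  intros Hb Hb' HD HD'. pose proof Hb as [Hu [Hy Hep]]. pose proof Hb' as [Hu' [Hy' Hep']].
  pose proof (HDy u y y' ep Hb ltac:(repeat split; auto)) as H1.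
  pose proof (HDue u u' y' ep ep' ltac:(repeat split; auto) Hb') as H2.
  rewrite HD in H1. rewrite HD', Rminus_0_r in H2.
  pose proof (Rabs_triang_inv (a * (y - y')) (- D u y' ep)) as H3.
  replace (a * (y - y') - - D u y' ep) with (- (0 - D u y' ep - a * (y - y'))) in H3 by ring.
  rewrite !Rabs_Ropp, Rabs_mult in H3. lra.
Qed.

Lemma A_zeros_close u y ep u' y' ep' : box u y ep -> box u' y' ep' ->
  A u y ep = 0 -> A u' y' ep' = 0 ->
  3 * Rabs c / 4 * Rabs (u - u') <= L * (Rabs (y - y') + Rabs (ep - ep')).
Proof.
  intros Hb Hb' HA HA'. pose proof Hb as [Hu [Hy Hep]]. pose proof Hb' as [Hu' [Hy' Hep']].
  pose proof (HAu u u' y ep Hb ltac:(repeat split; auto)) as H1.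
  pose proof (HAye u' y y' ep ep' ltac:(repeat split; auto) Hb') as H2.
  rewrite HA in H1. rewrite HA', Rminus_0_r in H2.
  pose proof (Rabs_triang_inv (c * (u - u')) (- A u' y ep)) as H3.
  replace (c * (u - u') - - A u' y ep) with (- (0 - A u' y ep - c * (u - u'))) in H3 by ring.
  rewrite !Rabs_Ropp, Rabs_mult in H3. lra.
Qed.

Lemma IFT_solutions_lipschitz : exists K, 0 <= K /\ forall u y ep u' y' ep',
  box u y ep -> box u' y' ep' -> D u y ep = 0 -> A u y ep = 0 -> D u' y' ep' = 0 -> A u' y' ep' = 0 ->
  Rabs (u - u') <= K * Rabs (ep - ep') /\ Rabs (y - y') <= K * Rabs (ep - ep').
Proof.
  pose proof Rabs_a_pos as Hpa. pose proof Rabs_c_pos as Hpc.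
  set (Ku := 2 * (2 * L * L + Rabs a * L) / (Rabs a * Rabs c)).
  set (Ky := 2 * (lam * Ku + L) / Rabs a).
  assert (HKu : 0 <= Ku) by (unfold Ku; apply Rmult_le_pos; [nra|left; apply Rinv_0_lt_compat; nra]).
  assert (HKy : 0 <= Ky) by (unfold Ky; apply Rmult_le_pos; [nra|left; apply Rinv_0_lt_compat; lra]).
  exists (Ku + Ky). split; [lra|].
  intros u y ep u' y' ep' Hb Hb' HD HA HD' HA'.
  pose proof (D_zeros_close u y ep u' y' ep' Hb Hb' HD HD') as Hy.
  pose proof (A_zeros_close u y ep u' y' ep' Hb Hb' HA HA') as Hu.
  set (du := Rabs (u - u')) in *. set (dy := Rabs (y - y')) in *. set (de := Rabs (ep - ep')) in *.
  assert (0 <= du) by apply Rabs_pos. assert (0 <= dy) by apply Rabs_pos. assert (0 <= de) by apply Rabs_pos.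
  (* eliminate [dy], using [2 L lam <= |a| |c| / 4] *)
  assert (Hdu : Rabs a * Rabs c / 2 * du <= (2 * L * L + Rabs a * L) * de).
  { assert (Rabs a * (3 * Rabs c / 4 * du) <= Rabs a * (L * (dy + de))) by (apply Rmult_le_compat_l; lra).
    assert (2 * L * (Rabs a / 2 * dy) <= 2 * L * (lam * du + L * de)) by (apply Rmult_le_compat_l; lra).
    assert (2 * L * lam * du <= Rabs a * Rabs c / 4 * du) by (apply Rmult_le_compat_r; lra).
    nra. }
  assert (Hdu' : du <= Ku * de).
  { apply Rmult_le_reg_l with (Rabs a * Rabs c / 2); [nra|].
    replace (Rabs a * Rabs c / 2 * (Ku * de)) with ((2 * L * L + Rabs a * L) * de) by (unfold Ku; field; lra).
    exact Hdu. }
  assert (Hdy' : dy <= Ky * de).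
  { apply Rmult_le_reg_l with (Rabs a / 2); [lra|].
    replace (Rabs a / 2 * (Ky * de)) with (lam * (Ku * de) + L * de) by (unfold Ky; field; lra).
    assert (lam * du <= lam * (Ku * de)) by (apply Rmult_le_compat_l; auto). lra. }
  split; nra.
Qed.

Lemma D_zero_in_y u ep : Rabs u <= r -> Rabs ep <= e -> exists y, Rabs (y - y0) < s /\ D u y ep = 0.
Proof.
  intros Hu Hep. pose proof Rabs_a_pos as Hpa.
  assert (Hbox : forall y, Rabs (y - y0) <= s -> box u y ep) by (intros; repeat split; auto).
  assert (Hy0 : Rabs (y0 - y0) <= s) by (rewrite Rminus_diag, Rabs_R0; lra).
  assert (Hcenter : Rabs (D u y0 ep) <= L * e).
  { pose proof (HDue u u y0 ep 0 (Hbox y0 Hy0) ltac:(repeat split; rewrite ?Rabs_R0; lra)) as H.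
    rewrite HD0, Rminus_diag, Rabs_R0, Rminus_0_r, Rminus_0_r in H by exact Hu.
    assert (L * Rabs ep <= L * e) by (apply Rmult_le_compat_l; auto). lra. }
  assert (Hend : forall t, Rabs t = s -> Rabs (D u (y0 + t) ep - a * t) < Rabs a * s).
  { intros t Ht. pose proof (HDy u (y0 + t) y0 ep) as H.
    replace (y0 + t - y0) with t in H by ring. rewrite Ht in H.
    specialize (H (Hbox (y0 + t) ltac:(replace (y0 + t - y0) with t by ring; lra)) (Hbox y0 Hy0)).
    pose proof (Rabs_triang (D u (y0 + t) ep - D u y0 ep - a * t) (D u y0 ep)).
    replace (D u (y0 + t) ep - D u y0 ep - a * t + D u y0 ep) with (D u (y0 + t) ep - a * t) in * by ring.
    lra. }
  pose proof (Hend s ltac:(rewrite Rabs_right; lra)) as Hp.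
  pose proof (Hend (- s) ltac:(rewrite Rabs_Ropp, Rabs_right; lra)) as Hm.
  destruct (IVT_lipschitz (fun y => D u y ep) (y0 - s) (y0 + s) (3 * Rabs a / 2)) as [z [Hz1 Hz2]].
  - lra.
  - lra.
  - intros z z' Hz Hz'.
    pose proof (HDy u z z' ep (Hbox z ltac:(apply Rabs_le; lra)) (Hbox z' ltac:(apply Rabs_le; lra))).
    pose proof (Rabs_triang (D u z ep - D u z' ep - a * (z - z')) (a * (z - z'))).
    replace (D u z ep - D u z' ep - a * (z - z') + a * (z - z')) with (D u z ep - D u z' ep) in * by ring.
    rewrite Rabs_mult in *. lra.
  - replace (y0 + - s) with (y0 - s) in Hm by ring.
    apply Rabs_def2 in Hp. apply Rabs_def2 in Hm. simpl.
    destruct (Rle_or_lt 0 a).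
    + rewrite Rabs_right in Hp, Hm by lra. assert (0 < a) by (destruct H; auto; congruence). nra.
    + rewrite Rabs_left in Hp, Hm by lra. nra.
  - exists z. split; [apply Rabs_def1; lra|exact Hz2].
Qed.

Section GraphOfDZeros.
Variables (ep : R) (Y : R -> R).
Hypotheses (Hep : Rabs ep <= e)
  (HY : forall u, Rabs u <= r -> Rabs (Y u - y0) < s /\ D u (Y u) ep = 0).

Lemma graph_in_box u : Rabs u <= r -> box u (Y u) ep.
Proof. intros Hu. destruct (HY u Hu). repeat split; auto; lra. Qed.

Lemma graph_lipschitz u u' : Rabs u <= r -> Rabs u' <= r ->
  Rabs (Y u - Y u') <= 2 * lam / Rabs a * Rabs (u - u').
Proof.
  intros Hu Hu'. pose proof Rabs_a_pos.
  pose proof (D_zeros_close u (Y u) ep u' (Y u') ep (graph_in_box u Hu) (graph_in_box u' Hu')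
    (proj2 (HY u Hu)) (proj2 (HY u' Hu'))) as Hclose.
  rewrite Rminus_diag, Rabs_R0, Rmult_0_r, Rplus_0_r in Hclose.
  apply Rmult_le_reg_l with (Rabs a / 2); [lra|].
  replace (Rabs a / 2 * (2 * lam / Rabs a * Rabs (u - u'))) with (lam * Rabs (u - u')) by (field; lra).
  exact Hclose.
Qed.

Lemma A_on_graph_endpoint t : Rabs t = r -> Rabs (A t (Y t) ep - c * t) < Rabs c * r / 2.
Proof.
  intros Ht. assert (Hbt : box t (Y t) ep) by (apply graph_in_box; lra).
  pose proof Hbt as [_ [Hyt _]].
  pose proof (HAu t 0 (Y t) ep Hbt ltac:(repeat split; rewrite ?Rabs_R0; lra)) as H1.
  rewrite !Rminus_0_r, Ht in H1.
  pose proof (HAye 0 (Y t) y0 ep 0 ltac:(repeat split; rewrite ?Rabs_R0; lra)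
    ltac:(repeat split; rewrite ?Rminus_diag, ?Rabs_R0; lra)) as H2.
  rewrite HA0, !Rminus_0_r in H2.
  assert (L * (Rabs (Y t - y0) + Rabs ep) <= L * (s + e)) by (apply Rmult_le_compat_l; lra).
  pose proof (Rabs_triang (A t (Y t) ep - A 0 (Y t) ep - c * t) (A 0 (Y t) ep)).
  replace (A t (Y t) ep - A 0 (Y t) ep - c * t + A 0 (Y t) ep) with (A t (Y t) ep - c * t) in * by ring.
  lra.
Qed.

Lemma A_on_graph_lipschitz z z' : Rabs z <= r -> Rabs z' <= r ->
  Rabs (A z (Y z) ep - A z' (Y z') ep) <= (5 * Rabs c / 4 + 2 * L * lam / Rabs a) * Rabs (z - z').
Proof.
  intros Hz Hz'. pose proof Rabs_a_pos.
  pose proof (graph_in_box z Hz) as Hb. pose proof (graph_in_box z' Hz') as Hb'.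
  pose proof Hb as [_ [Hy _]]. pose proof Hb' as [_ [Hy' Hep']].
  pose proof (HAu z z' (Y z) ep Hb ltac:(repeat split; auto)) as H1.
  pose proof (HAye z' (Y z) (Y z') ep ep ltac:(repeat split; auto) Hb') as H2.
  rewrite Rminus_diag, Rabs_R0, Rplus_0_r in H2.
  assert (L * Rabs (Y z - Y z') <= L * (2 * lam / Rabs a * Rabs (z - z')))
    by (apply Rmult_le_compat_l; [|apply graph_lipschitz]; auto).
  replace (L * (2 * lam / Rabs a * Rabs (z - z'))) with (2 * L * lam / Rabs a * Rabs (z - z')) in *
    by (field; lra).
  pose proof (Rabs_triang (A z (Y z) ep - A z' (Y z) ep - c * (z - z')) (c * (z - z'))).
  pose proof (Rabs_triang (A z (Y z) ep - A z' (Y z) ep) (A z' (Y z) ep - A z' (Y z') ep)).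
  replace (A z (Y z) ep - A z' (Y z) ep - c * (z - z') + c * (z - z'))
    with (A z (Y z) ep - A z' (Y z) ep) in * by ring.
  replace (A z (Y z) ep - A z' (Y z) ep + (A z' (Y z) ep - A z' (Y z') ep))
    with (A z (Y z) ep - A z' (Y z') ep) in * by ring.
  rewrite Rabs_mult in *. lra.
Qed.

End GraphOfDZeros.

(* First solve [D = 0] for [y], then [A = 0] along that graph. *)
Lemma IFT_solution_exists ep : Rabs ep <= e ->
  exists u y, Rabs u < r /\ Rabs (y - y0) < s /\ D u y ep = 0 /\ A u y ep = 0.
Proof.
  intros Hep. pose proof Rabs_a_pos. pose proof Rabs_c_pos.
  destruct (functional_choice (fun u y => Rabs u <= r -> Rabs (y - y0) < s /\ D u y ep = 0)) as [Y HY].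
  { intros u. destruct (Rle_or_lt (Rabs u) r) as [Hu|Hu].
    - destruct (D_zero_in_y u ep Hu Hep) as [y Hy]. exists y. auto.
    - exists y0. intros; lra. }
  pose proof (A_on_graph_endpoint ep Y Hep HY r ltac:(rewrite Rabs_right; lra)) as Hp.
  pose proof (A_on_graph_endpoint ep Y Hep HY (- r) ltac:(rewrite Rabs_Ropp, Rabs_right; lra)) as Hm.
  assert (Hlip0 : 0 <= 2 * L * lam / Rabs a)
    by (apply Rmult_le_pos; [nra|left; apply Rinv_0_lt_compat; lra]).
  destruct (IVT_lipschitz (fun u => A u (Y u) ep) (- r) r (5 * Rabs c / 4 + 2 * L * lam / Rabs a))
    as [z [Hz1 Hz2]]; [lra|lra| | |].
  - intros z z' Hz Hz'. apply A_on_graph_lipschitz; auto; apply Rabs_le; lra.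
  - replace (c * - r) with (- (c * r)) in Hm by ring.
    apply Rabs_def2 in Hp. apply Rabs_def2 in Hm.
    destruct (Rle_or_lt 0 c) as [Hc0|Hc0].
    + rewrite Rabs_right in Hp, Hm by lra. assert (0 < c) by (destruct Hc0; auto; congruence). nra.
    + rewrite Rabs_left in Hp, Hm by lra. nra.
  - assert (Hzr : Rabs z <= r) by (apply Rabs_le; lra). destruct (HY z Hzr) as [Hy HD].
    exists z, (Y z). repeat split; auto. apply Rabs_def1; lra.
Qed.

End QuantitativeIFT.

(** * The orbit recursion *)

(* [orbit w P F y0 ep u y k = (U_k, S_k)]: in the intended application the [k]-th iterate of
   [(x_0 + u, y)] is [(x_k + U_k, y + ep S_k)], where [x_k] is the unperturbed orbit,
   [w k] the translation amount used at step [k] and [P k = x_(k+1)]. *)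
Fixpoint orbit (w : nat -> R -> R) (P : nat -> R) (F : R -> R) (y0 ep u y : R) (k : nat) : R * R :=
  match k with
  | O => (u, 0)
  | S k => let p := orbit w P F y0 ep u y k in
           let u' := fst p + (w k (y + ep * snd p) - w k y0) in
           (u', snd p + F (P k + u'))
  end.

Definition lip_const (K : R) := K + 1.
Definition growth_const (K : R) := (1 + lip_const K) ^ 2 + 1.
Definition orbit_lip_const (q : nat) (K : R) := growth_const K ^ q.

Section OrbitEstimates.
Variables (w : nat -> R -> R) (P : nat -> R) (F : R -> R) (q : nat) (y0 rho sig eta K : R)
  (a g : nat -> R).
Hypothesis Hw : forall k z z', (k < q)%nat -> Rabs (z - y0) <= sig -> Rabs (z' - y0) <= sig ->
  Rabs (w k z - w k z' - a k * (z - z')) <= eta * Rabs (z - z').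
Hypothesis HF : forall k v v', (k < q)%nat -> Rabs v <= rho -> Rabs v' <= rho ->
  Rabs (F (P k + v) - F (P k + v') - g k * (v - v')) <= eta * Rabs (v - v').
Hypothesis HK : forall k, (k < q)%nat -> Rabs (a k) <= K /\ Rabs (g k) <= K /\ Rabs (F (P k)) <= K.
Hypotheses (Heta : 0 <= eta <= 1) (Hrho : rho <= 1) (HK0 : 0 <= K).

Local Notation L := (lip_const K).
Local Notation B := (2 * lip_const K).
Local Notation C := (orbit_lip_const q K).
Local Notation Q := (INR q).

Lemma lip_const_pos : 0 < L.
Proof. unfold lip_const. lra. Qed.

Lemma linear_error_lipschitz (h : R -> R) c x x' :
  Rabs c <= K -> Rabs (h x - h x' - c * (x - x')) <= eta * Rabs (x - x') ->
  Rabs (h x - h x') <= L * Rabs (x - x').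
Proof.
  intros Hc H. pose proof (Rabs_mult_le c (x - x') K (Rabs (x - x')) Hc (Rle_refl _)).
  pose proof (Rabs_triang (h x - h x' - c * (x - x')) (c * (x - x'))).
  replace (h x - h x' - c * (x - x') + c * (x - x')) with (h x - h x') in * by ring.
  assert (eta * Rabs (x - x') <= 1 * Rabs (x - x')) by (apply Rmult_le_compat_r; [apply Rabs_pos|lra]).
  unfold lip_const. lra.
Qed.

Lemma w_lipschitz k z z' : (k < q)%nat -> Rabs (z - y0) <= sig -> Rabs (z' - y0) <= sig ->
  Rabs (w k z - w k z') <= L * Rabs (z - z').
Proof. intros Hk Hz Hz'. apply (linear_error_lipschitz (w k) (a k)); [apply HK|apply Hw]; auto. Qed.

Lemma F_lipschitz k v v' : (k < q)%nat -> Rabs v <= rho -> Rabs v' <= rho ->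
  Rabs (F (P k + v) - F (P k + v')) <= L * Rabs (v - v').
Proof.
  intros Hk Hv Hv'. replace (v - v') with ((P k + v) - (P k + v')) by ring.
  apply (linear_error_lipschitz F (g k)); [apply HK; auto|].
  replace (P k + v - (P k + v')) with (v - v') by ring. apply HF; auto.
Qed.

Lemma F_bounded k v : (k < q)%nat -> Rabs v <= rho -> Rabs (F (P k + v)) <= B.
Proof.
  intros Hk Hv. pose proof (F_lipschitz k v 0 Hk Hv ltac:(rewrite Rabs_R0; pose proof (Rabs_pos v); lra)) as H.
  rewrite Rplus_0_r, Rminus_0_r in H. destruct (HK k Hk) as [_ [_ HFk]].
  pose proof (Rabs_triang (F (P k + v) - F (P k)) (F (P k))).
  replace (F (P k + v) - F (P k) + F (P k)) with (F (P k + v)) in * by ring.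
  assert (L * Rabs v <= L * 1) by (apply Rmult_le_compat_l; [left; apply lip_const_pos|lra]).
  unfold lip_const in *. lra.
Qed.

Local Notation X ep u y k := (fst (orbit w P F y0 ep u y k)).
Local Notation Sf ep u y k := (snd (orbit w P F y0 ep u y k)).

Lemma orbit_X_S ep u y k : X ep u y (S k) = X ep u y k + (w k (y + ep * Sf ep u y k) - w k y0).
Proof. reflexivity. Qed.

Lemma orbit_Sf_S ep u y k : Sf ep u y (S k) = Sf ep u y k + F (P k + X ep u y (S k)).
Proof. reflexivity. Qed.

Variables (r s e : R).
Hypotheses (Hr : r <= rho / 2) (Hs : s <= sig / 2) (Hsig : Q * L * sig <= rho / 2)
  (He0 : 0 <= e) (He : e * Q * B <= sig / 2) (He1 : e <= 1).
Local Notation box := (in_box y0 r s e).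

Lemma orbit_bounds u y ep : box u y ep -> forall k, (k <= q)%nat ->
  Rabs (X ep u y k) <= r + INR k * L * sig /\ Rabs (Sf ep u y k) <= INR k * B.
Proof.
  intros [Hu [Hy Hep]] k. pose proof lip_const_pos. pose proof (Rabs_pos (y - y0)).
  induction k as [|k IH]; intros Hk; [simpl; rewrite Rabs_R0; lra|].
  destruct IH as [IHX IHS]; [lia|]. rewrite orbit_Sf_S, orbit_X_S, S_INR.
  assert (HkQ : INR k + 1 <= Q) by (rewrite <- S_INR; apply le_INR; lia).
  assert (Hyk : Rabs (y + ep * Sf ep u y k - y0) <= sig).
  { assert (INR k * B <= Q * B) by (apply Rmult_le_compat_r; lra).
    assert (Rabs (ep * Sf ep u y k) <= e * (Q * B)) by (apply Rabs_mult_le; lra).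
    replace (y + ep * Sf ep u y k - y0) with ((y - y0) + ep * Sf ep u y k) by ring.
    eapply Rle_trans; [apply Rabs_triang|]. nra. }
  pose proof (w_lipschitz k _ y0 ltac:(lia) Hyk ltac:(rewrite Rminus_diag, Rabs_R0; lra)).
  assert (L * Rabs (y + ep * Sf ep u y k - y0) <= L * sig) by (apply Rmult_le_compat_l; lra).
  assert (HX : Rabs (X ep u y k + (w k (y + ep * Sf ep u y k) - w k y0)) <= r + (INR k + 1) * L * sig).
  { eapply Rle_trans; [apply Rabs_triang|]. lra. }
  split; [exact HX|].
  assert ((INR k + 1) * L * sig <= Q * L * sig) by (apply Rmult_le_compat_r; nra).
  pose proof (F_bounded k (X ep u y k + (w k (y + ep * Sf ep u y k) - w k y0)) ltac:(lia) ltac:(lra)).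
  eapply Rle_trans; [apply Rabs_triang|]. lra.
Qed.

Lemma orbit_in_balls u y ep : box u y ep -> forall k, (k <= q)%nat ->
  Rabs (X ep u y k) <= rho /\ Rabs (Sf ep u y k) <= Q * B /\ Rabs (y + ep * Sf ep u y k - y0) <= sig.
Proof.
  intros Hb k Hk. destruct (orbit_bounds u y ep Hb k Hk) as [H1 H2]. destruct Hb as [Hu [Hy Hep]].
  pose proof lip_const_pos. pose proof (Rabs_pos (y - y0)). assert (HkQ : INR k <= Q) by (apply le_INR; lia).
  assert (INR k * L * sig <= Q * L * sig) by (apply Rmult_le_compat_r; nra).
  assert (INR k * B <= Q * B) by (apply Rmult_le_compat_r; lra).
  split; [lra|]. split; [lra|].
  assert (Rabs (ep * Sf ep u y k) <= e * (Q * B)) by (apply Rabs_mult_le; lra).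
  replace (y + ep * Sf ep u y k - y0) with ((y - y0) + ep * Sf ep u y k) by ring.
  eapply Rle_trans; [apply Rabs_triang|]. lra.
Qed.

Lemma growth_const_ge1 : 1 <= growth_const K.
Proof. unfold growth_const. pose proof lip_const_pos. nra. Qed.

Lemma orbit_lip_const_pos : 0 < C.
Proof. unfold orbit_lip_const. apply pow_lt. pose proof growth_const_ge1. lra. Qed.

Section TwoOrbits.
Variables (u y ep u' y' ep' : R).
Hypotheses (Hb : box u y ep) (Hb' : box u' y' ep').

Local Notation dX k := (Rabs (X ep u y k - X ep' u' y' k)).
Local Notation dS k := (Rabs (Sf ep u y k - Sf ep' u' y' k)).
Local Notation W := (Rabs (y - y') + Q * B * Rabs (ep - ep')).

Lemma W_nonneg : 0 <= W.
Proof.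
  pose proof (Rabs_pos (y - y')). pose proof (Rabs_pos (ep - ep')). pose proof lip_const_pos.
  assert (0 <= Q * B) by (pose proof (pos_INR q); nra). nra.
Qed.

Lemma orbit_y_diff k : (k <= q)%nat ->
  Rabs ((y + ep * Sf ep u y k) - (y' + ep' * Sf ep' u' y' k)) <= Rabs (y - y') + e * dS k + Q * B * Rabs (ep - ep').
Proof.
  intros Hk. destruct (orbit_in_balls u' y' ep' Hb' k Hk) as [_ [HS' _]]. pose proof Hb as [_ [_ Hep]].
  replace ((y + ep * Sf ep u y k) - (y' + ep' * Sf ep' u' y' k)) with
    ((y - y') + ep * (Sf ep u y k - Sf ep' u' y' k) + (ep - ep') * Sf ep' u' y' k) by ring.
  eapply Rle_trans; [apply Rabs_triang|]. eapply Rle_trans; [apply Rplus_le_compat_r, Rabs_triang|].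
  pose proof (Rabs_mult_le ep (Sf ep u y k - Sf ep' u' y' k) e (dS k) Hep (Rle_refl _)).
  pose proof (Rabs_mult_le (ep - ep') (Sf ep' u' y' k) (Rabs (ep - ep')) (Q * B) (Rle_refl _) HS').
  lra.
Qed.

Lemma orbit_X_step_diff k : (k < q)%nat -> dX (S k) <= (1 + L) * (dX k + dS k + W).
Proof.
  intros Hk. pose proof lip_const_pos. pose proof W_nonneg.
  destruct (orbit_in_balls u y ep Hb k ltac:(lia)) as [_ [_ Hy1]].
  destruct (orbit_in_balls u' y' ep' Hb' k ltac:(lia)) as [_ [_ Hy2]].
  pose proof (w_lipschitz k _ _ Hk Hy1 Hy2) as Hwk. pose proof (orbit_y_diff k ltac:(lia)) as Hyd.
  rewrite !orbit_X_S.
  replace (X ep u y k + (w k (y + ep * Sf ep u y k) - w k y0) - (X ep' u' y' k + (w k (y' + ep' * Sf ep' u' y' k) - w k y0)))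
    with ((X ep u y k - X ep' u' y' k) + (w k (y + ep * Sf ep u y k) - w k (y' + ep' * Sf ep' u' y' k))) by ring.
  eapply Rle_trans; [apply Rabs_triang|].
  assert (e * dS k <= dS k) by (pose proof (Rabs_pos (Sf ep u y k - Sf ep' u' y' k)); pose proof Hb as [_ [_ Hep]]; pose proof (Rabs_pos ep); nra).
  assert (L * Rabs (y + ep * Sf ep u y k - (y' + ep' * Sf ep' u' y' k)) <= L * (dX k + dS k + W))
    by (apply Rmult_le_compat_l; [lra|]; pose proof (Rabs_pos (X ep u y k - X ep' u' y' k)); lra).
  pose proof (Rabs_pos (Sf ep u y k - Sf ep' u' y' k)). nra.
Qed.

Lemma orbit_Sf_step_diff k : (k < q)%nat -> dS (S k) <= dS k + L * dX (S k).
Proof.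
  intros Hk. destruct (orbit_in_balls u y ep Hb (S k) Hk) as [Hu1 _].
  destruct (orbit_in_balls u' y' ep' Hb' (S k) Hk) as [Hu2 _].
  rewrite (orbit_Sf_S ep u y k), (orbit_Sf_S ep' u' y' k).
  replace (Sf ep u y k + F (P k + X ep u y (S k)) - (Sf ep' u' y' k + F (P k + X ep' u' y' (S k))))
    with ((Sf ep u y k - Sf ep' u' y' k) + (F (P k + X ep u y (S k)) - F (P k + X ep' u' y' (S k)))) by ring.
  eapply Rle_trans; [apply Rabs_triang|]. apply Rplus_le_compat_l. apply F_lipschitz; auto.
Qed.

Lemma orbit_growth k : (k <= q)%nat ->
  dX k + dS k + W <= growth_const K ^ k * (Rabs (u - u') + W).
Proof.
  induction k as [|k IH]; intros Hk.
  - simpl. replace (0 - 0) with 0 by ring. rewrite Rabs_R0. lra.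
  - specialize (IH ltac:(lia)). pose proof lip_const_pos. pose proof W_nonneg.
    pose proof (orbit_X_step_diff k Hk) as HX. pose proof (orbit_Sf_step_diff k Hk) as HS.
    set (m := dX k + dS k + W) in *.
    assert (Hm : 0 <= m) by (unfold m; pose proof (Rabs_pos (X ep u y k - X ep' u' y' k));
      pose proof (Rabs_pos (Sf ep u y k - Sf ep' u' y' k)); lra).
    apply Rle_trans with (growth_const K * m).
    + unfold growth_const. pose proof (Rabs_pos (X ep u y k - X ep' u' y' k)).
      assert ((1 + L) * dX (S k) <= (1 + L) * ((1 + L) * m)) by (apply Rmult_le_compat_l; lra).
      unfold m in *. nra.
    + simpl pow. rewrite Rmult_assoc. apply Rmult_le_compat_l; [pose proof growth_const_ge1; lra|exact IH].
Qed.

Lemma orbit_lipschitz k : (k <= q)%nat ->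
  dX k <= C * (Rabs (u - u') + W) /\ dS k <= C * (Rabs (u - u') + W).
Proof.
  intros Hk. pose proof (orbit_growth k Hk) as H. pose proof W_nonneg.
  assert (growth_const K ^ k <= C) by (apply Rle_pow; [apply growth_const_ge1|exact Hk]).
  assert (growth_const K ^ k * (Rabs (u - u') + W) <= C * (Rabs (u - u') + W))
    by (apply Rmult_le_compat_r; pose proof (Rabs_pos (u - u')); lra).
  pose proof (Rabs_pos (X ep u y k - X ep' u' y' k)). pose proof (Rabs_pos (Sf ep u y k - Sf ep' u' y' k)).
  split; lra.
Qed.

End TwoOrbits.

Definition orbit_D u y ep := X ep u y q - u.
Definition orbit_A u y ep := Sf ep u y q.

Lemma orbit_D_center u : orbit_D u y0 0 = 0.
Proof.
  unfold orbit_D. enough (forall k, X 0 u y0 k = u) as H by (rewrite H; ring).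
  induction k; [reflexivity|]. rewrite orbit_X_S, IHk. replace (y0 + 0 * Sf 0 u y0 k) with y0 by ring. ring.
Qed.

Lemma orbit_A_center : orbit_A 0 y0 0 = sumk q (fun k => F (P k)).
Proof.
  unfold orbit_A. enough (forall k, X 0 0 y0 k = 0 /\ Sf 0 0 y0 k = sumk k (fun j => F (P j))) as H by apply H.
  induction k as [|k [IHX IHS]]; [split; reflexivity|].
  assert (HX : X 0 0 y0 (S k) = 0)
    by (rewrite orbit_X_S, IHX; replace (y0 + 0 * Sf 0 0 y0 k) with y0 by ring; ring).
  split; [exact HX|]. rewrite orbit_Sf_S, HX, IHS, sumk_S, Rplus_0_r. reflexivity.
Qed.

Local Notation tau := (e * C).

Lemma tau_nonneg : 0 <= tau.
Proof. pose proof orbit_lip_const_pos. nra. Qed.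

Lemma orbit_Sf_lipschitz_y u y y' ep k : box u y ep -> box u y' ep -> (k <= q)%nat ->
  Rabs (Sf ep u y k - Sf ep u y' k) <= C * Rabs (y - y').
Proof.
  intros Hb Hb' Hk. destruct (orbit_lipschitz u y ep u y' ep Hb Hb' k Hk) as [_ H].
  rewrite !Rminus_diag, Rabs_R0, Rmult_0_r, Rplus_0_l, Rplus_0_r in H. exact H.
Qed.

Lemma orbit_Sf_lipschitz_u u u' y ep k : box u y ep -> box u' y ep -> (k <= q)%nat ->
  Rabs (Sf ep u y k - Sf ep u' y k) <= C * Rabs (u - u').
Proof.
  intros Hb Hb' Hk. destruct (orbit_lipschitz u y ep u' y ep Hb Hb' k Hk) as [_ H].
  rewrite !Rminus_diag, Rabs_R0, Rmult_0_r, !Rplus_0_r in H. exact H.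
Qed.

Lemma orbit_D_slope_y u y y' ep : box u y ep -> box u y' ep ->
  Rabs (orbit_D u y ep - orbit_D u y' ep - sumk q a * (y - y'))
    <= Q * ((eta * (1 + tau) + K * tau) * Rabs (y - y')).
Proof.
  intros Hb Hb'. pose proof tau_nonneg.
  pose proof (telescope_approx (fun k => X ep u y k - X ep u y' k) (fun k => a k * (y - y'))
    ((eta * (1 + tau) + K * tau) * Rabs (y - y')) q) as T.
  cbv beta in T. rewrite Rminus_diag, Rminus_0_r, sumk_mult_r in T.
  unfold orbit_D. replace (X ep u y q - u - (X ep u y' q - u)) with (X ep u y q - X ep u y' q) by ring.
  apply T. intros k Hk.
  pose proof (orbit_Sf_lipschitz_y u y y' ep k Hb Hb' ltac:(lia)) as HS.
  destruct (orbit_in_balls u y ep Hb k ltac:(lia)) as [_ [_ Hy1]].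
  destruct (orbit_in_balls u y' ep Hb' k ltac:(lia)) as [_ [_ Hy2]].
  pose proof (Hw k _ _ Hk Hy1 Hy2) as Hwk. pose proof Hb as [_ [_ Hep]].
  set (dS := Sf ep u y k - Sf ep u y' k) in *.
  assert (Hd : Rabs (ep * dS) <= tau * Rabs (y - y')) by (rewrite Rmult_assoc; apply Rabs_mult_le; auto).
  assert (Hdy : Rabs (y + ep * Sf ep u y k - (y' + ep * Sf ep u y' k)) <= (1 + tau) * Rabs (y - y')).
  { replace (y + ep * Sf ep u y k - (y' + ep * Sf ep u y' k)) with ((y - y') + ep * dS) by (unfold dS; ring).
    eapply Rle_trans; [apply Rabs_triang|]. lra. }
  assert (Hak : Rabs (a k * (ep * dS)) <= K * (tau * Rabs (y - y'))) by (apply Rabs_mult_le; [apply HK|]; auto).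
  assert (eta * Rabs (y + ep * Sf ep u y k - (y' + ep * Sf ep u y' k)) <= eta * ((1 + tau) * Rabs (y - y')))
    by (apply Rmult_le_compat_l; lra).
  rewrite !orbit_X_S.
  replace (X ep u y k + (w k (y + ep * Sf ep u y k) - w k y0) - (X ep u y' k + (w k (y' + ep * Sf ep u y' k) - w k y0))
     - (X ep u y k - X ep u y' k) - a k * (y - y'))
   with ((w k (y + ep * Sf ep u y k) - w k (y' + ep * Sf ep u y' k)
          - a k * (y + ep * Sf ep u y k - (y' + ep * Sf ep u y' k))) + a k * (ep * dS)) by (unfold dS; ring).
  eapply Rle_trans; [apply Rabs_triang|]. lra.
Qed.

Lemma orbit_X_near_shift u u' y ep j : box u y ep -> box u' y ep -> (j <= q)%nat ->
  Rabs (X ep u y j - X ep u' y j - (u - u')) <= Q * L * tau * Rabs (u - u').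
Proof.
  intros Hb Hb' Hj. pose proof tau_nonneg. pose proof lip_const_pos. pose proof (pos_INR q).
  pose proof (telescope_bound (fun k => X ep u y k - X ep u' y k) (L * (tau * Rabs (u - u'))) j) as T.
  cbv beta in T. eapply Rle_trans; [apply T|].
  - intros k Hk. rewrite !orbit_X_S.
    replace (X ep u y k + (w k (y + ep * Sf ep u y k) - w k y0) - (X ep u' y k + (w k (y + ep * Sf ep u' y k) - w k y0))
      - (X ep u y k - X ep u' y k)) with (w k (y + ep * Sf ep u y k) - w k (y + ep * Sf ep u' y k)) by ring.
    destruct (orbit_in_balls u y ep Hb k ltac:(lia)) as [_ [_ Hy1]].
    destruct (orbit_in_balls u' y ep Hb' k ltac:(lia)) as [_ [_ Hy2]].
    eapply Rle_trans; [apply (w_lipschitz k); auto; lia|]. apply Rmult_le_compat_l; [lra|].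
    replace (y + ep * Sf ep u y k - (y + ep * Sf ep u' y k)) with (ep * (Sf ep u y k - Sf ep u' y k)) by ring.
    pose proof Hb as [_ [_ Hep]]. rewrite Rmult_assoc.
    apply Rabs_mult_le; [exact Hep|apply orbit_Sf_lipschitz_u; auto; lia].
  - assert (INR j <= Q) by (apply le_INR; auto).
    replace (Q * L * tau * Rabs (u - u')) with (Q * (L * (tau * Rabs (u - u')))) by ring.
    apply Rmult_le_compat_r; [|exact H2]. pose proof (Rabs_pos (u - u')). apply Rmult_le_pos; [lra|]. nra.
Qed.

Lemma orbit_A_slope_u u u' y ep : box u y ep -> box u' y ep ->
  Rabs (orbit_A u y ep - orbit_A u' y ep - sumk q g * (u - u'))
    <= Q * ((K * (Q * L * tau) + eta * (1 + Q * L * tau)) * Rabs (u - u')).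
Proof.
  intros Hb Hb'. pose proof tau_nonneg. pose proof lip_const_pos.
  pose proof (telescope_approx (fun k => Sf ep u y k - Sf ep u' y k) (fun k => g k * (u - u'))
    ((K * (Q * L * tau) + eta * (1 + Q * L * tau)) * Rabs (u - u')) q) as T.
  cbv beta in T. rewrite Rminus_diag, Rminus_0_r, sumk_mult_r in T. apply T.
  intros k Hk. rewrite !orbit_Sf_S.
  pose proof (orbit_X_near_shift u u' y ep (S k) Hb Hb' Hk) as HU.
  destruct (orbit_in_balls u y ep Hb (S k) Hk) as [Hu1 _].
  destruct (orbit_in_balls u' y ep Hb' (S k) Hk) as [Hu2 _].
  pose proof (HF k _ _ Hk Hu1 Hu2) as HFk. destruct (HK k Hk) as [_ [Hg _]].
  set (dX := X ep u y (S k) - X ep u' y (S k)) in *.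
  replace (Sf ep u y k + F (P k + X ep u y (S k)) - (Sf ep u' y k + F (P k + X ep u' y (S k)))
     - (Sf ep u y k - Sf ep u' y k) - g k * (u - u'))
    with ((F (P k + X ep u y (S k)) - F (P k + X ep u' y (S k)) - g k * dX) + g k * (dX - (u - u')))
    by (unfold dX; ring).
  eapply Rle_trans; [apply Rabs_triang|].
  assert (Rabs (g k * (dX - (u - u'))) <= K * (Q * L * tau * Rabs (u - u'))) by (apply Rabs_mult_le; auto).
  assert (Rabs dX <= (1 + Q * L * tau) * Rabs (u - u')).
  { pose proof (Rabs_triang (dX - (u - u')) (u - u')) as Htr.
    replace (dX - (u - u') + (u - u')) with dX in Htr by ring. lra. }
  assert (eta * Rabs dX <= eta * ((1 + Q * L * tau) * Rabs (u - u'))) by (apply Rmult_le_compat_l; lra).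
  lra.
Qed.

Lemma orbit_D_lipschitz_u_ep u u' y ep ep' : box u y ep -> box u' y ep' ->
  Rabs (orbit_D u y ep - orbit_D u' y ep')
    <= Q * L * tau * Rabs (u - u') + Q * L * (tau + 1) * (Q * B) * Rabs (ep - ep').
Proof.
  intros Hb Hb'. pose proof tau_nonneg. pose proof lip_const_pos. pose proof (pos_INR q).
  pose proof (telescope_bound (fun k => X ep u y k - X ep' u' y k)
    (L * (tau * (Rabs (u - u') + Q * B * Rabs (ep - ep')) + Q * B * Rabs (ep - ep'))) q) as T.
  cbv beta in T. unfold orbit_D.
  replace (X ep u y q - u - (X ep' u' y q - u')) with (X ep u y q - X ep' u' y q - (u - u')) by ring.
  eapply Rle_trans; [apply T|].
  - intros k Hk. rewrite !orbit_X_S.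
    replace (X ep u y k + (w k (y + ep * Sf ep u y k) - w k y0) - (X ep' u' y k + (w k (y + ep' * Sf ep' u' y k) - w k y0))
      - (X ep u y k - X ep' u' y k)) with (w k (y + ep * Sf ep u y k) - w k (y + ep' * Sf ep' u' y k)) by ring.
    destruct (orbit_in_balls u y ep Hb k ltac:(lia)) as [_ [_ Hy1]].
    destruct (orbit_in_balls u' y ep' Hb' k ltac:(lia)) as [_ [_ Hy2]].
    eapply Rle_trans; [apply (w_lipschitz k); auto; lia|]. apply Rmult_le_compat_l; [lra|].
    destruct (orbit_lipschitz u y ep u' y ep' Hb Hb' k ltac:(lia)) as [_ HS].
    rewrite Rminus_diag, Rabs_R0, Rplus_0_l in HS.
    pose proof (orbit_y_diff u y ep u' y ep' Hb Hb' k ltac:(lia)) as Hd.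
    rewrite Rminus_diag, Rabs_R0, Rplus_0_l in Hd.
    assert (e * Rabs (Sf ep u y k - Sf ep' u' y k) <= e * (C * (Rabs (u - u') + Q * B * Rabs (ep - ep'))))
      by (apply Rmult_le_compat_l; lra).
    lra.
  - right. ring.
Qed.

End OrbitEstimates.

(** * Periodic points as solutions of [D = 0] and [eps A = 0] *)

Definition fixed_point_branch (Tq : R -> R * R -> R * R) (U : R * R -> Prop) (x0 y0 eps0 : R) : Prop :=
  exists xe ye : R -> R,
  (forall eps, 0 < Rabs eps < eps0 ->
     0 <= xe eps < 1 /\ U (xe eps, ye eps) /\ Tq eps (xe eps, ye eps) = (xe eps, ye eps) /\
     (forall x y, 0 <= x < 1 -> U (x, y) -> Tq eps (x, y) = (x, y) -> x = xe eps /\ y = ye eps)) /\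
  (forall eps, 0 < Rabs eps < eps0 -> forall eta, 0 < eta -> exists delta, 0 < delta /\
     forall eps', 0 < Rabs eps' < eps0 -> Rabs (eps' - eps) < delta ->
       cdist (xe eps') (xe eps) < eta /\ Rabs (ye eps' - ye eps) < eta) /\
  (forall eta, 0 < eta -> exists delta, 0 < delta /\ forall eps, 0 < Rabs eps < Rmin delta eps0 ->
     cdist (xe eps) x0 < eta /\ Rabs (ye eps - y0) < eta).

Section FixedPointBranch.
Variables (Tq : R -> R * R -> R * R) (x0 y0 : R) (D A : R -> R -> R -> R) (r s e : R).
Hypotheses (Hx0 : 0 <= x0 < 1) (Hr : 0 < r) (Hs : 0 < s) (He : 0 < e).
Local Notation box := (in_box y0 r s e).
Hypothesis Hfix : forall u y ep, box u y ep ->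
  (Tq ep (frac_part (x0 + u), y) = (frac_part (x0 + u), y) <-> D u y ep = 0 /\ ep * A u y ep = 0).

Definition box_nbhd (p : R * R) : Prop := 0 <= fst p < 1 /\ cdist (fst p) x0 < r /\ Rabs (snd p - y0) < s.

Lemma box_nbhd_is_nbhd : is_nbhd box_nbhd (x0, y0).
Proof.
  exists (Rmin r s). split; [apply Rmin_glb_lt; auto|].
  intros x y Hx Hc Hy. pose proof (Rmin_l r s). pose proof (Rmin_r r s).
  repeat split; simpl in *; lra.
Qed.

Lemma cdist_shift_le a b : cdist (frac_part (x0 + a)) (frac_part (x0 + b)) <= Rabs (a - b).
Proof. eapply Rle_trans; [apply cdist_frac_part_le|]. right. f_equal. ring. Qed.

Lemma cdist_shift_center_le a : cdist (frac_part (x0 + a)) x0 <= Rabs a.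
Proof.
  pose proof (cdist_shift_le a 0) as H. rewrite Rplus_0_r, Rminus_0_r, (frac_part_id x0 Hx0) in H.
  exact H.
Qed.

Lemma fixed_points_in_box_nbhd ep x y : 0 <= x < 1 -> box_nbhd (x, y) -> Rabs ep <= e ->
  Tq ep (x, y) = (x, y) -> exists u, x = frac_part (x0 + u) /\ box u y ep /\ D u y ep = 0 /\ ep * A u y ep = 0.
Proof.
  intros Hx [_ [Hc Hy]] Hep Hfx. simpl in Hc, Hy.
  destruct (cdist_lt_displacement x x0 r Hx Hc) as [u [Hu ->]].
  assert (Hb : box u y ep) by (repeat split; lra).
  exists u. split; [reflexivity|]. split; [exact Hb|]. apply Hfix; auto.
Qed.

Lemma no_fixed_point_near :
  (forall u y ep, box u y ep -> ep <> 0 -> A u y ep <> 0) ->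
  forall eps, 0 < Rabs eps < e -> forall x y, 0 <= x < 1 -> box_nbhd (x, y) -> Tq eps (x, y) <> (x, y).
Proof.
  intros HA eps [Hep0 Hep] x y Hx Hn Hfx.
  destruct (fixed_points_in_box_nbhd eps x y Hx Hn ltac:(lra) Hfx) as [u [_ [Hb [_ HAe]]]].
  assert (Heps : eps <> 0) by (intros ->; rewrite Rabs_R0 in Hep0; lra).
  apply (HA u y eps Hb Heps). apply Rmult_integral in HAe. destruct HAe; [contradiction|assumption].
Qed.

Hypothesis Hex : forall ep, Rabs ep <= e ->
  exists u y, Rabs u < r /\ Rabs (y - y0) < s /\ D u y ep = 0 /\ A u y ep = 0.
Hypothesis Hlip : exists K, 0 <= K /\ forall u y ep u' y' ep',
  box u y ep -> box u' y' ep' -> D u y ep = 0 -> A u y ep = 0 -> D u' y' ep' = 0 -> A u' y' ep' = 0 ->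
  Rabs (u - u') <= K * Rabs (ep - ep') /\ Rabs (y - y') <= K * Rabs (ep - ep').
Hypotheses (HD0 : D 0 y0 0 = 0) (HA0 : A 0 y0 0 = 0).

Lemma solution_branch : exists Z : R -> R * R, forall ep, Rabs ep <= e ->
  box (fst (Z ep)) (snd (Z ep)) ep /\ Rabs (fst (Z ep)) < r /\ Rabs (snd (Z ep) - y0) < s /\
  D (fst (Z ep)) (snd (Z ep)) ep = 0 /\ A (fst (Z ep)) (snd (Z ep)) ep = 0.
Proof.
  apply (functional_choice (fun ep (p : R * R) => Rabs ep <= e -> box (fst p) (snd p) ep /\
    Rabs (fst p) < r /\ Rabs (snd p - y0) < s /\ D (fst p) (snd p) ep = 0 /\ A (fst p) (snd p) ep = 0)).
  intros ep. destruct (Rle_or_lt (Rabs ep) e) as [Hep|Hep].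
  - destruct (Hex ep Hep) as [u [y Hu]]. exists (u, y). intros _. simpl. repeat split; lra.
  - exists (0, y0). intros; lra.
Qed.

Lemma zeros_unique_at_eps u y u' y' ep : box u y ep -> box u' y' ep ->
  D u y ep = 0 -> A u y ep = 0 -> D u' y' ep = 0 -> A u' y' ep = 0 -> u = u' /\ y = y'.
Proof.
  intros Hb Hb' HD HA HD' HA'. destruct Hlip as [K [_ HK]].
  destruct (HK u y ep u' y' ep Hb Hb' HD HA HD' HA') as [G1 G2].
  rewrite Rminus_diag, Rabs_R0, Rmult_0_r in G1, G2.
  pose proof (Rabs_pos (u - u')). pose proof (Rabs_pos (y - y')).
  assert (Hu : Rabs (u - u') = 0) by lra. assert (Hy : Rabs (y - y') = 0) by lra.
  apply Rabs_eq_0 in Hu. apply Rabs_eq_0 in Hy. split; lra.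
Qed.

Lemma unique_fixed_branch : fixed_point_branch Tq box_nbhd x0 y0 e.
Proof.
  destruct Hlip as [K [HK0 HK]]. destruct solution_branch as [Z HZ].
  assert (Hb0 : box 0 y0 0) by (repeat split; rewrite ?Rminus_diag, Rabs_R0; lra).
  exists (fun ep => frac_part (x0 + fst (Z ep))), (fun ep => snd (Z ep)). split; [|split].
  - intros eps [Hep0 Hep]. destruct (HZ eps ltac:(lra)) as [Hb [Hu [Hy [HD HA]]]].
    split; [apply frac_part_range|]. split.
    { repeat split; try apply frac_part_range; simpl; [|lra].
      eapply Rle_lt_trans; [apply cdist_shift_center_le|exact Hu]. }
    split; [apply Hfix; auto; rewrite HA; split; [exact HD|ring]|].
    intros x y Hx Hn Hfx.
    destruct (fixed_points_in_box_nbhd eps x y Hx Hn ltac:(lra) Hfx) as [u' [-> [Hb' [HD' HA']]]].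
    apply Rmult_integral in HA'. destruct HA' as [HA'|HA']; [rewrite HA', Rabs_R0 in Hep0; lra|].
    destruct (zeros_unique_at_eps u' y _ _ eps Hb' Hb HD' HA' HD HA) as [-> ->]. split; reflexivity.
  - intros eps [_ Hep] eta Heta. exists (eta / (K + 1)). split; [apply Rdiv_lt_0_compat; lra|].
    intros eps' [_ Hep'] Hd.
    destruct (HZ eps ltac:(lra)) as [Hb [_ [_ [HD HA]]]].
    destruct (HZ eps' ltac:(lra)) as [Hb' [_ [_ [HD' HA']]]].
    destruct (HK _ _ _ _ _ _ Hb' Hb HD' HA' HD HA) as [G1 G2].
    pose proof (mult_lt_of_lt_div_succ K _ eta HK0 (Rabs_pos _) Hd).
    split; [eapply Rle_lt_trans; [apply cdist_shift_le|]|]; lra.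
  - intros eta Heta. exists (eta / (K + 1)). split; [apply Rdiv_lt_0_compat; lra|].
    intros eps [_ Hep]. pose proof (Rmin_l (eta / (K + 1)) e). pose proof (Rmin_r (eta / (K + 1)) e).
    destruct (HZ eps ltac:(lra)) as [Hb [_ [_ [HD HA]]]].
    destruct (HK _ _ _ _ _ _ Hb Hb0 HD HA HD0 HA0) as [G1 G2].
    rewrite !Rminus_0_r in G1. rewrite Rminus_0_r in G2.
    pose proof (mult_lt_of_lt_div_succ K (Rabs eps) eta HK0 (Rabs_pos _) ltac:(lra)).
    split; [eapply Rle_lt_trans; [apply cdist_shift_center_le|]|]; lra.
Qed.

End FixedPointBranch.

Section PeriodicOrbit.
Variables (d : nat) (pa pb : Rbar) (b om : nat -> R -> R) (f : R -> R) (q : nat) (x0 y0 : R)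
  (alpha : nat -> nat).
Hypotheses (Hfam : IEM_family d pa pb b om) (Hf : smooth f) (Hfper : forall x, f (x + 1) = f x)
  (Hq : (1 <= q)%nat) (Hy0 : inP pa pb y0) (Hx0 : 0 <= x0 < 1)
  (Hper : Nat.iter q (IEM d b om y0) x0 = x0)
  (Hint : forall k, (k < q)%nat -> (alpha k < d)%nat /\
     b (alpha k) y0 < lift b y0 (Nat.iter k (IEM d b om y0) x0) < b (S (alpha k)) y0).

Local Notation x_ k := (Nat.iter k (IEM d b om y0) x0).
Let w k := om (alpha k).
Let P k := x_ (S k).
Local Notation X ep u y k := (fst (orbit w P f y0 ep u y k)).
Local Notation Sf ep u y k := (snd (orbit w P f y0 ep u y k)).

Lemma orbit_pt_range k : 0 <= x_ k < 1.
Proof. destruct k; [exact Hx0|]. simpl. unfold IEM. apply frac_part_range. Qed.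

Definition margin (rho sig : R) : Prop := forall k, (k < q)%nat -> forall u y,
  Rabs u <= rho -> Rabs (y - y0) <= sig -> inP pa pb y /\ b (alpha k) y < lift b y0 (x_ k) + u < b (S (alpha k)) y.

Lemma interior_margin_at k : (k < q)%nat -> exists rk, 0 < rk /\ forall u y,
  Rabs u <= rk -> Rabs (y - y0) <= rk -> inP pa pb y /\ b (alpha k) y < lift b y0 (x_ k) + u < b (S (alpha k)) y.
Proof.
  intros Hk. destruct (Hint k Hk) as [Hal [H1 H2]]. destruct Hfam as [_ [_ [_ [Hb _]]]].
  set (Lk := lift b y0 (x_ k)) in *.
  pose proof (Rmin_l (Lk - b (alpha k) y0) (b (S (alpha k)) y0 - Lk)).
  pose proof (Rmin_r (Lk - b (alpha k) y0) (b (S (alpha k)) y0 - Lk)).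
  set (gam := Rmin (Lk - b (alpha k) y0) (b (S (alpha k)) y0 - Lk)) in *.
  assert (Hgam : 0 < gam) by (apply Rmin_glb_lt; lra).
  destruct (continuous_Rabs_lt _ _ (ex_derive_continuous _ _ (proj1 (Hb (alpha k) ltac:(lia) y0 Hy0))) (gam / 2))
    as [dl1 [Hdl1 Hc1]]; [lra|].
  destruct (continuous_Rabs_lt _ _ (ex_derive_continuous _ _ (proj1 (Hb (S (alpha k)) ltac:(lia) y0 Hy0))) (gam / 2))
    as [dl2 [Hdl2 Hc2]]; [lra|].
  destruct (inP_open pa pb y0 Hy0) as [s0 [Hs0 HP]].
  pose proof (Rmin_l (Rmin (gam / 4) s0) (Rmin dl1 dl2)). pose proof (Rmin_r (Rmin (gam / 4) s0) (Rmin dl1 dl2)).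
  pose proof (Rmin_l (gam / 4) s0). pose proof (Rmin_r (gam / 4) s0).
  pose proof (Rmin_l dl1 dl2). pose proof (Rmin_r dl1 dl2).
  assert (Hrk : 0 < Rmin (Rmin (gam / 4) s0) (Rmin dl1 dl2)) by (repeat apply Rmin_glb_lt; lra).
  exists (Rmin (Rmin (gam / 4) s0) (Rmin dl1 dl2) / 2). split; [lra|].
  intros u y Hu Hy. split; [apply HP; lra|].
  specialize (Hc1 y ltac:(lra)). specialize (Hc2 y ltac:(lra)).
  apply Rabs_def2 in Hc1. apply Rabs_def2 in Hc2. apply Rabs_le_between in Hu. lra.
Qed.

Lemma interior_margin : exists rm, 0 < rm /\ margin rm rm.
Proof.
  destruct (uniform_radius (fun k rm => forall u y, Rabs u <= rm -> Rabs (y - y0) <= rm ->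
     inP pa pb y /\ b (alpha k) y < lift b y0 (x_ k) + u < b (S (alpha k)) y) q) as [rm Hrm].
  - intros k r0 r' Hr' H u y Hu Hy. apply H; lra.
  - exact interior_margin_at.
  - exists rm. exact Hrm.
Qed.

Lemma endpoints_ordered y : inP pa pb y ->
  (forall al, (al < d)%nat -> b al y < b (S al) y) /\ b d y = b 0%nat y + 1.
Proof. intros H. destruct Hfam as [_ [_ [Hb _]]]. apply Hb, H. Qed.

Section Margin.
Variables (rho sig : R).
Hypothesis Hmargin : margin rho sig.

Lemma IEM_near_orbit k u y : (k < q)%nat -> Rabs u <= rho -> Rabs (y - y0) <= sig ->
  IEM d b om y (frac_part (x_ k + u)) = frac_part (x_ k + u + w k y).
Proof.
  intros Hk Hu Hy. destruct (Hmargin k Hk u y Hu Hy) as [HP Hl].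
  destruct (endpoints_ordered y HP) as [Hb Hd]. apply (IEM_translate d b om y Hb Hd y0); auto.
  apply Hint, Hk.
Qed.

Lemma iterate_as_orbit ep u y :
  (forall k, (k < q)%nat -> Rabs (X ep u y k) <= rho /\ Rabs (y + ep * Sf ep u y k - y0) <= sig) ->
  forall k, (k <= q)%nat ->
  Nat.iter k (Tmap d b om f ep) (frac_part (x0 + u), y) = (frac_part (x_ k + X ep u y k), y + ep * Sf ep u y k).
Proof.
  intros Hb k. induction k as [|k IH]; intros Hk; [simpl; f_equal; ring|].
  rewrite Nat.iter_succ, IH by lia. unfold Tmap. cbn [fst snd].
  destruct (Hb k ltac:(lia)) as [Hu Hy].
  rewrite (IEM_near_orbit k _ _ ltac:(lia) Hu Hy).
  assert (Hx : x_ (S k) = frac_part (x_ k + w k y0)).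
  { pose proof (Rabs_pos (X ep u y k)). pose proof (Rabs_pos (y + ep * Sf ep u y k - y0)).
    pose proof (IEM_near_orbit k 0 y0 ltac:(lia) ltac:(rewrite Rabs_R0; lra)
      ltac:(rewrite Rminus_diag, Rabs_R0; lra)) as Hs.
    rewrite !Rplus_0_r, frac_part_id in Hs by apply orbit_pt_range. exact Hs. }
  assert (E : frac_part (x_ k + X ep u y k + w k (y + ep * Sf ep u y k)) = frac_part (x_ (S k) + X ep u y (S k))).
  { rewrite Hx, frac_part_frac_part_add, orbit_X_S. f_equal. ring. }
  rewrite E, periodic_frac_part, orbit_Sf_S by exact Hfper. unfold P. f_equal. ring.
Qed.

Lemma iterate_fixed_iff ep u y : rho <= 1 / 4 ->
  (forall k, (k <= q)%nat -> Rabs (X ep u y k) <= rho /\ Rabs (y + ep * Sf ep u y k - y0) <= sig) ->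
  Nat.iter q (Tmap d b om f ep) (frac_part (x0 + u), y) = (frac_part (x0 + u), y) <->
  orbit_D w P f q y0 u y ep = 0 /\ ep * orbit_A w P f q y0 u y ep = 0.
Proof.
  intros Hrho Hb. rewrite iterate_as_orbit, Hper by (auto; intros; apply Hb; lia).
  unfold orbit_D, orbit_A. destruct (Hb 0%nat ltac:(lia)) as [Hu _]. destruct (Hb q (le_n q)) as [HX _].
  simpl in Hu. split.
  - intros Heq. injection Heq as E1 E2. split; [|lra].
    destruct (frac_part_eq_IZR_diff _ _ E1) as [z Hz].
    assert (Rabs (IZR z) < 1).
    { rewrite <- Hz. replace (x0 + X ep u y q - (x0 + u)) with (X ep u y q + - u) by ring.
      eapply Rle_lt_trans; [apply Rabs_triang|]. rewrite Rabs_Ropp. lra. }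
    apply IZR_Rabs_lt_1 in H. subst z. simpl in Hz. lra.
  - intros [E1 E2]. f_equal; [do 2 f_equal|]; lra.
Qed.

End Margin.

Let a k := Derive (w k) y0.
Let g k := Derive f (P k).
Let K := sumk q (fun k => Rabs (a k) + Rabs (g k) + Rabs (f (P k))).

Lemma K_bound k : (k < q)%nat -> Rabs (a k) <= K /\ Rabs (g k) <= K /\ Rabs (f (P k)) <= K.
Proof.
  intros Hk. pose proof (Rabs_pos (a k)). pose proof (Rabs_pos (g k)). pose proof (Rabs_pos (f (P k))).
  assert (Rabs (a k) + Rabs (g k) + Rabs (f (P k)) <= K).
  { apply (sumk_term_le q (fun k => Rabs (a k) + Rabs (g k) + Rabs (f (P k)))); [|exact Hk].
    intros j _. pose proof (Rabs_pos (a j)). pose proof (Rabs_pos (g j)). pose proof (Rabs_pos (f (P j))). lra. }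
  lra.
Qed.

Lemma K_nonneg : 0 <= K.
Proof. destruct (K_bound 0 ltac:(lia)) as [H _]. pose proof (Rabs_pos (a 0%nat)). lra. Qed.

Lemma w_linearization eta : 0 < eta -> exists sg, 0 < sg /\ forall k z z', (k < q)%nat ->
  Rabs (z - y0) <= sg -> Rabs (z' - y0) <= sg -> Rabs (w k z - w k z' - a k * (z - z')) <= eta * Rabs (z - z').
Proof.
  intros Heta.
  destruct (uniform_radius (fun k sg => forall z z', Rabs (z - y0) <= sg -> Rabs (z' - y0) <= sg ->
    Rabs (w k z - w k z' - a k * (z - z')) <= eta * Rabs (z - z')) q) as [sg [Hsg H]].
  - intros k r0 r' Hr' H z z' Hz Hz'. apply H; lra.
  - intros k Hk. destruct (Hint k Hk) as [Hal _].
    destruct Hfam as [_ [_ [_ [_ Hom]]]]. specialize (Hom (alpha k) Hal).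
    destruct (inP_open pa pb y0 Hy0) as [s0 [Hs0 HP]].
    apply (derive_linear_error (w k) y0); [|apply (Hom y0 Hy0)|exact Heta].
    exists s0. split; [exact Hs0|]. intros z Hz. apply (Hom z (HP z Hz)).
  - exists sg. split; [exact Hsg|]. intros k z z' Hk. apply H, Hk.
Qed.

Lemma f_linearization eta : 0 < eta -> exists rf, 0 < rf /\ forall k v v', (k < q)%nat ->
  Rabs v <= rf -> Rabs v' <= rf -> Rabs (f (P k + v) - f (P k + v') - g k * (v - v')) <= eta * Rabs (v - v').
Proof.
  intros Heta.
  destruct (uniform_radius (fun k rf => forall v v', Rabs v <= rf -> Rabs v' <= rf ->
    Rabs (f (P k + v) - f (P k + v') - g k * (v - v')) <= eta * Rabs (v - v')) q) as [rf [Hrf H]].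
  - intros k r0 r' Hr' H v v' Hv Hv'. apply H; lra.
  - intros k Hk.
    destruct (derive_linear_error f (P k)) with (eta := eta) as [rf [Hrf H]]; [| |exact Heta|].
    + exists 1. split; [lra|]. intros z _. exact (Hf 1%nat z).
    + apply (ex_derive_continuous (Derive f)). exact (Hf 2%nat (P k)).
    + exists rf. split; [exact Hrf|]. intros v v' Hv Hv'.
      specialize (H (P k + v) (P k + v')). replace (P k + v - (P k + v')) with (v - v') in H by ring.
      apply H; [replace (P k + v - P k) with v by ring|replace (P k + v' - P k) with v' by ring]; auto.
  - exists rf. split; [exact Hrf|]. intros k v v' Hk. apply H, Hk.
Qed.

Local Notation Q := (INR q).
Local Notation L := (lip_const K).

Lemma local_radii eta : 0 < eta -> exists rho sig,
  0 < rho <= 1 / 4 /\ 0 < sig /\ 2 * (Q * L) * sig <= rho /\ margin rho sig /\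
  (forall k z z', (k < q)%nat -> Rabs (z - y0) <= sig -> Rabs (z' - y0) <= sig ->
     Rabs (w k z - w k z' - a k * (z - z')) <= eta * Rabs (z - z')) /\
  (forall k v v', (k < q)%nat -> Rabs v <= rho -> Rabs v' <= rho ->
     Rabs (f (P k + v) - f (P k + v') - g k * (v - v')) <= eta * Rabs (v - v')).
Proof.
  intros Heta. destruct interior_margin as [rm [Hrm Hm]].
  destruct (w_linearization eta Heta) as [sw [Hsw HW]].
  destruct (f_linearization eta Heta) as [rf [Hrf HF]].
  assert (HQL : 0 < Q * L).
  { apply Rmult_lt_0_compat; [apply lt_0_INR; lia|]. unfold lip_const. pose proof K_nonneg. lra. }
  pose proof (Rmin_l (Rmin rf rm) (1 / 4)). pose proof (Rmin_r (Rmin rf rm) (1 / 4)).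
  pose proof (Rmin_l rf rm). pose proof (Rmin_r rf rm).
  assert (Hrho : 0 < Rmin (Rmin rf rm) (1 / 4)) by (repeat apply Rmin_glb_lt; lra).
  set (rho := Rmin (Rmin rf rm) (1 / 4)) in *.
  pose proof (Rmin_l (Rmin sw rm) (rho / (2 * (Q * L)))). pose proof (Rmin_r (Rmin sw rm) (rho / (2 * (Q * L)))).
  pose proof (Rmin_l sw rm). pose proof (Rmin_r sw rm).
  assert (Hsg : 0 < Rmin (Rmin sw rm) (rho / (2 * (Q * L))))
    by (repeat apply Rmin_glb_lt; try apply Rdiv_lt_0_compat; lra).
  set (sg := Rmin (Rmin sw rm) (rho / (2 * (Q * L)))) in *.
  exists rho, sg. split; [lra|]. split; [exact Hsg|]. split.
  { assert (Hd : sg * (2 * (Q * L)) <= rho / (2 * (Q * L)) * (2 * (Q * L))) by (apply Rmult_le_compat_r; lra).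
    unfold Rdiv in Hd. rewrite Rmult_assoc, Rinv_l, Rmult_1_r in Hd by lra. lra. }
  split; [|split].
  - intros k Hk u y Hu Hy. apply Hm; [exact Hk| |]; lra.
  - intros k z z' Hk Hz Hz'. apply HW; [exact Hk| |]; lra.
  - intros k v v' Hk Hv Hv'. apply HF; [exact Hk| |]; lra.
Qed.

Local Notation B := (2 * lip_const K).
Local Notation C := (orbit_lip_const q K).
Local Notation D := (orbit_D w P f q y0).
Local Notation A := (orbit_A w P f q y0).
Local Notation T eps := (Nat.iter q (Tmap d b om f eps)).

Lemma Q_ge_1 : 1 <= Q.
Proof. apply (le_INR 1), Hq. Qed.

Lemma L_ge_1 : 1 <= L.
Proof. unfold lip_const. pose proof K_nonneg. lra. Qed.

(* A common Lipschitz constant for [D] in [ep] and for [A] in [(y, ep)] on the boxes below. *)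
Let Lip := C * (1 + Q * B) + 2 * (Q * Q * L * B).
Local Notation ca := (sumk q a).
Local Notation cc := (sumk q g).

Section LocalBox.
Variables (eta rho sig r s e : R).
Hypotheses (Heta : 0 < eta <= 1) (Hrho : 0 < rho <= 1 / 4) (Hsig_rho : 2 * (Q * L) * sig <= rho)
  (Hmargin : margin rho sig)
  (HW : forall k z z', (k < q)%nat -> Rabs (z - y0) <= sig -> Rabs (z' - y0) <= sig ->
     Rabs (w k z - w k z' - a k * (z - z')) <= eta * Rabs (z - z'))
  (HF : forall k v v', (k < q)%nat -> Rabs v <= rho -> Rabs v' <= rho ->
     Rabs (f (P k + v) - f (P k + v') - g k * (v - v')) <= eta * Rabs (v - v')).
Hypotheses (Hr : r <= rho / 2) (Hs : s <= sig / 2) (He0 : 0 <= e) (He : Q * B * e <= sig / 2) (He1 : e <= 1).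
Local Notation box := (in_box y0 r s e).

Local Ltac orbit_hyps :=
  first [eassumption | apply K_bound | apply K_nonneg | lra | lia].

Lemma box_fixed_iff u y ep : box u y ep ->
  T ep (frac_part (x0 + u), y) = (frac_part (x0 + u), y) <-> D u y ep = 0 /\ ep * A u y ep = 0.
Proof.
  intros Hb. apply (iterate_fixed_iff rho sig Hmargin); [lra|]. intros k Hk.
  destruct (orbit_in_balls w P f q y0 rho sig eta K a g HW HF K_bound ltac:(lra) ltac:(lra) K_nonneg r s e)
    with (u := u) (y := y) (ep := ep) (k := k) as [H1 [_ H3]]; orbit_hyps.
Qed.

Lemma box_A_lipschitz u y ep u' y' ep' : box u y ep -> box u' y' ep' ->
  Rabs (A u y ep - A u' y' ep') <= C * (Rabs (u - u') + (Rabs (y - y') + Q * B * Rabs (ep - ep'))).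
Proof.
  intros Hb Hb'. unfold orbit_A.
  apply (orbit_lipschitz w P f q y0 rho sig eta K a g HW HF K_bound ltac:(lra) ltac:(lra) K_nonneg r s e);
    orbit_hyps.
Qed.

Local Notation tau := (e * C).
Hypotheses (Heta_a : Q * eta <= Rabs ca / 8) (Heta_c : Q * eta <= Rabs cc / 16)
  (Htau1 : tau <= 1) (HtauQL : Q * L * tau <= 1) (Htau_a : Q * L * tau <= Rabs ca / 4)
  (Htau_c : Q * Q * L * L * tau <= Rabs cc / 8).

Lemma box_D_slope_y u y y' ep : box u y ep -> box u y' ep ->
  Rabs (D u y ep - D u y' ep - ca * (y - y')) <= Rabs ca / 2 * Rabs (y - y').
Proof.
  intros Hb Hb'. pose proof K_nonneg. pose proof Q_ge_1. pose proof (orbit_lip_const_pos q K K_nonneg).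
  eapply Rle_trans; [eapply (orbit_D_slope_y w P f q y0 rho sig eta K a g) with (r := r) (s := s) (e := e); orbit_hyps|].
  rewrite <- Rmult_assoc. apply Rmult_le_compat_r; [apply Rabs_pos|].
  assert (Q * eta * tau <= Q * eta * 1) by (apply Rmult_le_compat_l; nra).
  assert (Q * K * tau <= Q * L * tau) by (apply Rmult_le_compat_r; [nra|unfold lip_const; nra]).
  nra.
Qed.

Lemma box_A_slope_u u u' y ep : box u y ep -> box u' y ep ->
  Rabs (A u y ep - A u' y ep - cc * (u - u')) <= Rabs cc / 4 * Rabs (u - u').
Proof.
  intros Hb Hb'. pose proof K_nonneg. pose proof Q_ge_1. pose proof (orbit_lip_const_pos q K K_nonneg).
  eapply Rle_trans; [eapply (orbit_A_slope_u w P f q y0 rho sig eta K a g) with (r := r) (s := s) (e := e); orbit_hyps|].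
  rewrite <- Rmult_assoc. apply Rmult_le_compat_r; [apply Rabs_pos|].
  assert (0 <= Q * L * tau) by (pose proof L_ge_1; apply Rmult_le_pos; nra).
  assert (Q * K * (Q * L * tau) <= Q * L * (Q * L * tau)) by (apply Rmult_le_compat_r; [|unfold lip_const]; nra).
  assert (Q * eta * (Q * L * tau) <= Q * eta * 1) by (apply Rmult_le_compat_l; nra).
  nra.
Qed.

Lemma box_D_lipschitz u u' y ep ep' : box u y ep -> box u' y ep' ->
  Rabs (D u y ep - D u' y ep') <= Q * L * tau * Rabs (u - u') + Lip * Rabs (ep - ep').
Proof.
  intros Hb Hb'. pose proof K_nonneg. pose proof Q_ge_1. pose proof L_ge_1. pose proof (orbit_lip_const_pos q K K_nonneg).
  eapply Rle_trans; [eapply (orbit_D_lipschitz_u_ep w P f q y0 rho sig eta K a g) with (r := r) (s := s) (e := e); orbit_hyps|].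
  apply Rplus_le_compat_l, Rmult_le_compat_r; [apply Rabs_pos|].
  assert (0 <= C * (1 + Q * B)) by (apply Rmult_le_pos; nra).
  assert (Q * L * (tau + 1) * (Q * B) <= Q * L * 2 * (Q * B)) by (apply Rmult_le_compat_r; nra).
  unfold Lip. nra.
Qed.

Lemma box_A_lipschitz_y_ep u y y' ep ep' : box u y ep -> box u y' ep' ->
  Rabs (A u y ep - A u y' ep') <= Lip * (Rabs (y - y') + Rabs (ep - ep')).
Proof.
  intros Hb Hb'. pose proof Q_ge_1. pose proof L_ge_1. pose proof (orbit_lip_const_pos q K K_nonneg).
  eapply Rle_trans; [apply box_A_lipschitz; assumption|]. rewrite Rminus_diag, Rabs_R0, Rplus_0_l.
  pose proof (Rabs_pos (y - y')). pose proof (Rabs_pos (ep - ep')).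
  assert (HQB : 0 <= Q * B) by (apply Rmult_le_pos; lra).
  assert (C * Rabs (y - y') <= C * (1 + Q * B) * Rabs (y - y')) by (apply Rmult_le_compat_r; nra).
  assert (C * (Q * B * Rabs (ep - ep')) <= C * (1 + Q * B) * Rabs (ep - ep')) by nra.
  assert (0 <= 2 * (Q * Q * L * B) * (Rabs (y - y') + Rabs (ep - ep'))) by (apply Rmult_le_pos; nra).
  unfold Lip. nra.
Qed.

Hypotheses (Hca : ca <> 0) (Hcc : cc <> 0) (Hr0 : 0 < r) (Hs0 : 0 < s) (Hepos : 0 < e)
  (Hlam_small : 8 * Lip * (Q * L * tau) <= Rabs ca * Rabs cc) (He_small : 2 * Lip * e < Rabs ca * s)
  (Hs_small : 4 * Lip * (s + e) < Rabs cc * r) (HS0 : sumk q (fun k => f (P k)) = 0).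

Lemma box_fixed_branch : fixed_point_branch (fun eps => T eps) (box_nbhd x0 y0 r s) x0 y0 e.
Proof.
  pose proof Q_ge_1. pose proof L_ge_1. pose proof (orbit_lip_const_pos q K K_nonneg).
  assert (HLip : 0 <= Lip) by (unfold Lip; apply Rplus_le_le_0_compat; apply Rmult_le_pos; nra).
  assert (Hlam : 0 <= Q * L * tau) by (apply Rmult_le_pos; nra).
  assert (HD0 : forall u, Rabs u <= r -> D u y0 0 = 0) by (intros; apply orbit_D_center).
  assert (HA0 : A 0 y0 0 = 0) by (rewrite orbit_A_center; exact HS0).
  apply (unique_fixed_branch (fun eps => T eps) x0 y0 D A r s e); auto.
  - intros u y ep Hb. apply box_fixed_iff, Hb.
  - intros ep Hep. apply (IFT_solution_exists D A y0 ca cc r s e (Q * L * tau) Lip); auto.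
    + apply box_D_slope_y. + apply box_D_lipschitz. + apply box_A_slope_u. + apply box_A_lipschitz_y_ep.
  - apply (IFT_solutions_lipschitz D A y0 ca cc r s e (Q * L * tau) Lip); auto.
    + apply box_D_slope_y. + apply box_D_lipschitz. + apply box_A_slope_u. + apply box_A_lipschitz_y_ep.
  - apply orbit_D_center.
Qed.

End LocalBox.

Lemma sumk_along_orbit (h : R -> R) : sumk q (fun k => h (P k)) = sumk q (fun k => h (x_ k)).
Proof. apply (sumk_shift_periodic q (fun k => h (x_ k))). simpl. rewrite Hper. reflexivity. Qed.

Lemma no_periodic_points_near : sumk q (fun k => f (x_ k)) <> 0 ->
  exists eps0, 0 < eps0 /\ exists U : R * R -> Prop, is_nbhd U (x0, y0) /\
  forall eps, 0 < Rabs eps < eps0 -> forall x y, 0 <= x < 1 -> U (x, y) -> T eps (x, y) <> (x, y).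
Proof.
  intros HS0. rewrite <- sumk_along_orbit in HS0. set (S0 := sumk q (fun k => f (P k))) in *.
  assert (HS0p : 0 < Rabs S0) by (apply Rabs_pos_lt, HS0).
  destruct (local_radii 1 Rlt_0_1) as [rho [sig [Hrho [Hsig [Hsr [Hm [HW HF]]]]]]].
  pose proof Q_ge_1. pose proof L_ge_1. pose proof (orbit_lip_const_pos q K K_nonneg).
  assert (Hev : at_right 0 (fun t => 0 < t /\ 1 * t < 1 /\ 2 * t < rho /\ 2 * t < sig /\
    Q * B * t < sig / 2 /\ C * (2 + Q * B) * t < Rabs S0)).
  { repeat apply filter_and; try apply at_right_0_pos; apply at_right_0_mult_lt; lra. }
  destruct (Hierarchy.filter_ex _ Hev) as [t [Ht0 [Ht1 [Ht2 [Ht3 [Ht4 Ht5]]]]]].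
  exists t. split; [exact Ht0|]. exists (box_nbhd x0 y0 t t). split; [apply box_nbhd_is_nbhd; lra|].
  apply (no_fixed_point_near (fun eps => T eps) x0 y0 D A t t t).
  - intros u y ep Hb. eapply (box_fixed_iff 1 rho sig t t t); try eassumption; lra.
  - intros u y ep Hb _ HA.
    assert (HAl : Rabs (A u y ep - A 0 y0 0) <= C * (Rabs (u - 0) + (Rabs (y - y0) + Q * B * Rabs (ep - 0))))
      by (eapply (box_A_lipschitz 1 rho sig t t t); try eassumption; repeat split; rewrite ?Rminus_diag, ?Rabs_R0; lra).
    rewrite HA, orbit_A_center, Rminus_0_l, Rabs_Ropp, !Rminus_0_r in HAl. fold S0 in HAl.
    destruct Hb as [Hu [Hy Hep]].
    assert (Q * B * Rabs ep <= Q * B * t) by (apply Rmult_le_compat_l; nra).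
    assert (C * (Rabs u + (Rabs (y - y0) + Q * B * Rabs ep)) <= C * ((2 + Q * B) * t))
      by (apply Rmult_le_compat_l; lra).
    lra.
Qed.

Lemma unique_periodic_branch : sumk q (fun k => f (x_ k)) = 0 ->
  sumk q (fun k => Derive f (x_ k)) * sumk q (fun k => Derive (om (alpha k)) y0) <> 0 ->
  exists eps0, 0 < eps0 /\ exists U : R * R -> Prop, is_nbhd U (x0, y0) /\
  fixed_point_branch (fun eps => T eps) U x0 y0 eps0.
Proof.
  intros HS0 HM. rewrite <- sumk_along_orbit in HS0. rewrite <- (sumk_along_orbit (Derive f)) in HM.
  change (cc * ca <> 0) in HM.
  assert (Hca : ca <> 0) by (intros H; apply HM; rewrite H; ring).
  assert (Hcc : cc <> 0) by (intros H; apply HM; rewrite H; ring).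
  pose proof (Rabs_pos_lt _ Hca). pose proof (Rabs_pos_lt _ Hcc).
  pose proof Q_ge_1. pose proof L_ge_1. pose proof (orbit_lip_const_pos q K K_nonneg).
  assert (HQB : 0 < Q * B) by (apply Rmult_lt_0_compat; lra).
  assert (HLip : 0 < Lip).
  { assert (0 < C * (1 + Q * B)) by (apply Rmult_lt_0_compat; lra).
    assert (0 <= Q * Q * L * B) by (repeat apply Rmult_le_pos; lra). unfold Lip. lra. }
  (* Choose [eta], then [rho] and [sig], then [r = rho / 2], [s] and [e], each small enough
     with respect to the previous ones. *)
  assert (Hev_eta : at_right 0 (fun t => 0 < t /\ 1 * t < 1 /\ Q * t < Rabs ca / 8 /\ Q * t < Rabs cc / 16))
    by (repeat apply filter_and; try apply at_right_0_pos; apply at_right_0_mult_lt; lra).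
  destruct (Hierarchy.filter_ex _ Hev_eta) as [eta [Heta0 [Heta1 [Heta_a Heta_c]]]].
  destruct (local_radii eta Heta0) as [rho [sig [Hrho [Hsig [Hsr [Hm [HW HF]]]]]]].
  assert (Hev_s : at_right 0 (fun t => 0 < t /\ 2 * t < sig /\ 8 * Lip * t < Rabs cc * (rho / 2)))
    by (repeat apply filter_and; try apply at_right_0_pos; apply at_right_0_mult_lt;
      first [lra | apply Rmult_lt_0_compat; lra]).
  destruct (Hierarchy.filter_ex _ Hev_s) as [s [Hs0 [Hs1 Hs2]]].
  assert (Hev_e : at_right 0 (fun t => 0 < t /\ 1 * t < 1 /\ Q * B * t < sig / 2 /\ C * t < 1 /\
    Q * L * C * t < 1 /\ Q * L * C * t < Rabs ca / 4 /\ Q * Q * L * L * C * t < Rabs cc / 8 /\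
    8 * Lip * (Q * L * C) * t < Rabs ca * Rabs cc /\ 2 * Lip * t < Rabs ca * s /\ 8 * Lip * t < Rabs cc * (rho / 2)))
    by (repeat apply filter_and; try apply at_right_0_pos; apply at_right_0_mult_lt;
      first [lra | apply Rmult_lt_0_compat; lra]).
  destruct (Hierarchy.filter_ex _ Hev_e) as [e [He0 [He1 [He2 [He3 [He4 [He5 [He6 [He7 [He8 He9]]]]]]]]]].
  exists e. split; [exact He0|]. exists (box_nbhd x0 y0 (rho / 2) s). split; [apply box_nbhd_is_nbhd; lra|].
  eapply (box_fixed_branch eta rho sig (rho / 2) s e); try eassumption; lra.
Qed.

End PeriodicOrbit.

Theorem mainTheorem15
  (d : nat) (pa pb : Rbar) (b om : nat -> R -> R) (f : R -> R)
  (q : nat) (x0 y0 : R) (alpha : nat -> nat)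
  (Hfam : IEM_family d pa pb b om)
  (Hf : smooth f) (Hfper : forall x, f (x + 1) = f x)
  (Hq : (1 <= q)%nat)
  (Hy0 : inP pa pb y0)
  (Hx0 : 0 <= x0 < 1)
  (Hper : Nat.iter q (IEM d b om y0) x0 = x0)
  (Hmin : forall k, (0 < k < q)%nat -> Nat.iter k (IEM d b om y0) x0 <> x0)
  (Hint : forall k, (k < q)%nat ->
     (alpha k < d)%nat /\
     b (alpha k) y0 < lift b y0 (Nat.iter k (IEM d b om y0) x0) < b (S (alpha k)) y0) :
  let xs := fun k => Nat.iter k (IEM d b om y0) x0 in
  let M := sumk q (fun k => Derive f (xs k)) *
           sumk q (fun k => Derive (om (alpha k)) y0) in
  let T := fun eps => Tmap d b om f eps in
  (sumk q (fun k => f (xs k)) = 0 -> M <> 0 ->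
   exists eps0, 0 < eps0 /\
   exists U : R * R -> Prop, is_nbhd U (x0, y0) /\
   exists xe ye : R -> R,
     (forall eps, 0 < Rabs eps < eps0 ->
        0 <= xe eps < 1 /\ U (xe eps, ye eps) /\
        Nat.iter q (T eps) (xe eps, ye eps) = (xe eps, ye eps) /\
        (forall x y, 0 <= x < 1 -> U (x, y) ->
           Nat.iter q (T eps) (x, y) = (x, y) -> x = xe eps /\ y = ye eps)) /\
     (forall eps, 0 < Rabs eps < eps0 ->
        forall eta, 0 < eta -> exists delta, 0 < delta /\
          forall eps', 0 < Rabs eps' < eps0 -> Rabs (eps' - eps) < delta ->
            cdist (xe eps') (xe eps) < eta /\ Rabs (ye eps' - ye eps) < eta) /\
     (forall eta, 0 < eta -> exists delta, 0 < delta /\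
        forall eps, 0 < Rabs eps < Rmin delta eps0 ->
          cdist (xe eps) x0 < eta /\ Rabs (ye eps - y0) < eta))
  /\
  (sumk q (fun k => f (xs k)) <> 0 ->
   exists eps0, 0 < eps0 /\
   exists U : R * R -> Prop, is_nbhd U (x0, y0) /\
   forall eps, 0 < Rabs eps < eps0 ->
     forall x y, 0 <= x < 1 -> U (x, y) -> Nat.iter q (T eps) (x, y) <> (x, y)).
Proof.
  intros xs M T. split.
  - intros HS0 HM. eapply unique_periodic_branch; eassumption.
  - intros HS0. eapply no_periodic_points_near; eassumption.
Qed.
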